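(* Let $\omega\colon\mathbf Z_+\to(0,+\infty)$ be a weight which is bounded from below, such that $\sum_{n\ge0}1/\omega(k2^n)<+\infty$ for every $k\ge3$, and such that $\mathcal T$ is bounded on $\mathcal X_\omega$. Then $\mathcal T$ is chaotic on $\mathcal X_\omega$, i.e. it is hypercyclic (has a vector with dense orbit) and its set of periodic points $\{f:\ \mathcal T^Nf=f\text{ for some }N\ge1\}$ is dense in $\mathcal X_\omega$. In particular this holds for $\omega=\omega_0$, $\omega_0(n)=(n+1)/\pi$.
   Context: $T\colon\mathbf Z_+\to\mathbf Z_+$ is the modified Collatz map: $T(n)=n/2$ for $n$ even, $T(n)=(3n+1)/2$ for $n$ odd. $\mathcal X_\omega$ is the Hilbert space of holomorphic functions $f(z)=\sum_{n\ge3}c_nz^n$ on the unit disk with $\|f\|_\omega^2=\sum_{n\ge3}|c_n|^2/\omega(n)<\infty$. $\mathcal T\sum_{n\ge3}c_nz^n=\sum_{j\ge3,\,T(j)\ge3}c_jz^{T(j)}$. $\mathcal T$ is bounded on $\mathcal X_\omega$ iff the sequences $\omega(6m)/\omega(3m)$, $\omega(6m+2)/\omega(3m+1)$, $(\omega(6m+4)+\omega(2m+1))/\omega(3m+2)$ ($m\ge1$) are bounded; this holds for $\omega_0$. *)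

From Stdlib Require Import Reals Lra Lia Arith.
From Coquelicot Require Import Coquelicot.
Open Scope R_scope.

Definition Tcol (n : nat) : nat :=
  if Nat.even n then Nat.div n 2 else Nat.div (3 * n + 1) 2.

(* Elements of X_omega are represented by their Taylor coefficient sequences
   c : nat -> C, f(z) = sum_{n>=3} c_n z^n. *)
Definition coeffs := nat -> C.

(* f is holomorphic on the unit disk: the power series has radius >= 1. *)
Definition holo_disk (c : coeffs) : Prop :=
  forall r : R, 0 <= r < 1 -> ex_series (fun n => Cmod (c n) * r ^ n).

Definition wsum (omega : nat -> R) (c : coeffs) : nat -> R :=
  fun n => (Cmod (c n)) ^ 2 / omega n.

Definition in_X (omega : nat -> R) (c : coeffs) : Prop :=
  (forall n, (n < 3)%nat -> c n = (RtoC 0)) /\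
  holo_disk c /\
  ex_series (wsum omega c).

Definition normX (omega : nat -> R) (c : coeffs) : R :=
  sqrt (Series (wsum omega c)).

Definition csub (f g : coeffs) : coeffs := fun n => Cminus (f n) (g n).

(* The operator  T(sum_{n>=3} c_n z^n) = sum_{j>=3, T(j)>=3} c_j z^{T(j)}.
   Coefficient of z^m: sum of c_j over j >= 3 with T(j) = m (m >= 3).
   Since T(j) >= j/2, such j satisfy j <= 2m, so the sum is finite. *)
Definition Top (c : coeffs) : coeffs :=
  fun m => if (3 <=? m)%nat then
             sum_n (fun j => if andb (3 <=? j)%nat (Tcol j =? m)%nat then c j else (RtoC 0))
                   (2 * m)%nat
           else (RtoC 0).

Definition T_bounded (omega : nat -> R) : Prop :=
  (forall c, in_X omega c -> in_X omega (Top c)) /\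
  exists M : R, forall c, in_X omega c -> normX omega (Top c) <= M * normX omega c.

Definition hypercyclic (omega : nat -> R) : Prop :=
  exists f, in_X omega f /\
    forall g, in_X omega g -> forall eps, 0 < eps ->
      exists N : nat, normX omega (csub (Nat.iter N Top f) g) < eps.

Definition dense_periodic (omega : nat -> R) : Prop :=
  forall g, in_X omega g -> forall eps, 0 < eps ->
    exists f, in_X omega f /\
      (exists N : nat, (1 <= N)%nat /\ Nat.iter N Top f = f) /\
      normX omega (csub f g) < eps.

Definition chaotic (omega : nat -> R) : Prop :=
  hypercyclic omega /\ dense_periodic omega.

Definition omega0 (n : nat) : R := INR (n + 1) / PI.

(* Let [S] be the dilation [z^n |-> z^(2n)]; it is a right inverse of [T] on sequences
   vanishing below [3], and [||S^N p||^2 = sum_x |p_x|^2 / omega(2^N x)] tends to [0] for every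
   polynomial [p] because [sum_n 1/omega(x 2^n)] converges.
   Polynomials killed by a power of [T] are dense.  Write [x = 2^n b] with [b] odd: if [b >= 3] then
   [T^(n+1)] identifies [z^x] with [z^(2^n (3b+1))] since [T b = T (3b+1)], and if [b = 1] both [z^x]
   and [z^(4x)] are killed because [T 4 = 2].  Iterating gives distinct [x < y_1 < y_2 < ...] with every
   [z^x - z^(y_i)] killed, and [z^x - (1/L) sum_(i<=L) z^(y_i)] is killed and [O(1/sqrt L)]-close to [z^x].
   If [T^K p = 0], then [f = sum_k S^(kN) p] (for [N] large) satisfies [T^N f = f] and is close to [p].
   For a dense sequence [t_j] of such polynomials and very lacunary exponents [n_k], the vector
   [f = sum_k S^(n_k) t_k] satisfies [T^(n_j) f = t_j + sum_(k>j) S^(n_k - n_j) t_k], which is close to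
   [t_j]: [f] is hypercyclic.  The blocks have disjoint supports, which makes every norm computation
   exact, and their coefficients grow polynomially, which makes the sums holomorphic on the disk. *)

From Stdlib Require Import Reals Lra Lia ZArith FunctionalExtensionality IndefiniteDescription Cantor.
From Coquelicot Require Import Coquelicot.
Open Scope R_scope.

(* [ring] does not recognise the carrier [AbelianMonoid.sort _] in the type of [sum_n]:
   abstract the sums first. *)
Ltac generalize_sums T :=
  repeat match goal with
  | |- context [@sum_n ?G ?f ?n] => let s := fresh "s" in generalize (@sum_n G f n); intro s; try change T in s
  end.

Ltac ring_C := generalize_sums C; match goal with |- ?a = ?b => change (@eq C a b); ring end.

Ltac ring_R := generalize_sums R; match goal with |- ?a = ?b => change (@eq R a b); ring end.

Lemma even_div2 n : Nat.even n = true -> n = (2 * (n / 2))%nat.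
Proof. intros [k ->]%Nat.even_spec. rewrite Nat.mul_comm, Nat.div_mul; lia. Qed.

Lemma odd_div2 n : Nat.even n = false -> n = (2 * (n / 2) + 1)%nat.
Proof.
  intros E. pose proof (Nat.div_mod n 2 ltac:(lia)). pose proof (Nat.mod_upper_bound n 2 ltac:(lia)).
  destruct (Nat.eq_dec (n mod 2) 0); [|lia].
  enough (Nat.even n = true) by congruence.
  apply Nat.even_spec. exists (n / 2)%nat. lia.
Qed.

Lemma div2_double k : ((2 * k) / 2 = k)%nat.
Proof. rewrite Nat.mul_comm, Nat.div_mul; lia. Qed.

Lemma Tcol_double m : Tcol (2 * m) = m.
Proof. unfold Tcol. rewrite Nat.even_even. apply div2_double. Qed.

Lemma Tcol_even_eq j m : Nat.even j = true -> Tcol j = m -> j = (2 * m)%nat.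
Proof. intros E H. unfold Tcol in H. rewrite E in H. pose proof (even_div2 j E). lia. Qed.

Lemma Tcol_ge_half y : (y <= 2 * Tcol y)%nat.
Proof.
  unfold Tcol. destruct (Nat.even y) eqn:E.
  - pose proof (even_div2 y E). lia.
  - pose proof (Nat.div_mod (3 * y + 1) 2 ltac:(lia)).
    pose proof (Nat.mod_upper_bound (3 * y + 1) 2 ltac:(lia)). lia.
Qed.

Lemma Tcol_odd_3S1 b : Nat.even b = false -> Tcol (3 * b + 1) = Tcol b.
Proof.
  intros E. pose proof (odd_div2 b E) as Hb. unfold Tcol. rewrite E.
  replace (Nat.even (3 * b + 1)) with true; [f_equal|].
  symmetry. apply Nat.even_spec. exists (3 * (b / 2) + 2)%nat. lia.
Qed.

Lemma odd_part_decomp x : (1 <= x)%nat -> exists n b, Nat.even b = false /\ x = (2 ^ n * b)%nat.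
Proof.
  induction x as [x IH] using (well_founded_induction Wf_nat.lt_wf). intros Hx.
  destruct (Nat.even x) eqn:E.
  - pose proof (even_div2 x E). destruct (IH (x / 2)%nat) as [n [b [Hb Hxb]]]; try lia.
    exists (S n), b. split; auto. simpl. lia.
  - exists 0%nat, x. split; auto. simpl. lia.
Qed.

Lemma sum_Sn_C (u : nat -> C) n : (sum_n u (S n) : C) = Cplus (sum_n u n) (u (S n)).
Proof. exact (sum_Sn u n). Qed.

Lemma sum_n_C_shift (u : nat -> C) n : (sum_n u (S n) : C) = Cplus (u 0%nat) (sum_n (fun k => u (S k)) n).
Proof.
  induction n as [|n IH].
  - rewrite sum_Sn_C, !sum_O. reflexivity.
  - rewrite sum_Sn_C, IH, (sum_Sn_C (fun k => u (S k))). ring_C.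
Qed.

Lemma sum_n_C_zero (u : nat -> C) N : (forall j, (j <= N)%nat -> u j = RtoC 0) -> (sum_n u N : C) = RtoC 0.
Proof.
  induction N as [|N IH]; intros H.
  - rewrite sum_O. apply H. lia.
  - rewrite sum_Sn_C, IH by (intros; apply H; lia). rewrite H by lia. ring_C.
Qed.

Lemma sum_n_C_single (u : nat -> C) N k : (k <= N)%nat ->
  (forall j, (j <= N)%nat -> j <> k -> u j = RtoC 0) -> (sum_n u N : C) = u k.
Proof.
  induction N as [|N IH]; intros Hk H.
  - replace k with 0%nat by lia. apply sum_O.
  - rewrite sum_Sn_C. destruct (Nat.eq_dec k (S N)) as [->|Hne].
    + rewrite sum_n_C_zero by (intros; apply H; lia). ring_C.
    + rewrite IH, (H (S N)) by (lia || (intros; apply H; lia)). ring_C.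
Qed.

Lemma sum_n_Cplus (u v : nat -> C) n :
  (sum_n (fun k => Cplus (u k) (v k)) n : C) = Cplus (sum_n u n) (sum_n v n).
Proof. exact (sum_n_plus u v n). Qed.

Lemma sum_n_Cmult_l (a : C) (u : nat -> C) n :
  (sum_n (fun k => Cmult a (u k)) n : C) = Cmult a (sum_n u n).
Proof. exact (sum_n_mult_l (K := C_Ring) a u n). Qed.

Lemma sum_n_Cminus (u v : nat -> C) n :
  (sum_n (fun k => Cminus (u k) (v k)) n : C) = Cminus (sum_n u n) (sum_n v n).
Proof. induction n as [|n IH]; [now rewrite !sum_O | rewrite !sum_Sn_C, IH; ring_C]. Qed.

Lemma sum_n_C_const (c : C) N : (sum_n (fun _ => c) N : C) = Cmult (RtoC (INR (S N))) c.
Proof.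
  induction N as [|N IH]; [rewrite sum_O; simpl; ring_C|].
  rewrite sum_Sn_C, IH, (S_INR (S N)), RtoC_plus. ring_C.
Qed.

Lemma sum_Sn_R (u : nat -> R) n : (sum_n u (S n) : R) = sum_n u n + u (S n).
Proof. exact (sum_Sn u n). Qed.

Lemma sum_O_R (u : nat -> R) : (sum_n u 0 : R) = u 0%nat.
Proof. exact (sum_O u). Qed.

Lemma Cmod_sum_n_le (u : nat -> C) K : Cmod (sum_n u K) <= sum_n (fun i => Cmod (u i)) K.
Proof.
  induction K as [|K IH]; [rewrite sum_O, sum_O_R; lra|].
  rewrite sum_Sn_C, sum_Sn_R. eapply Rle_trans; [apply Cmod_triangle | lra].
Qed.

Lemma Cmod_sum_n_disjoint_sq (u : nat -> C) K :
  (forall i j, (i <= K)%nat -> (j <= K)%nat -> i <> j -> u i = RtoC 0 \/ u j = RtoC 0) ->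
  Cmod (sum_n u K) ^ 2 = sum_n (fun i => Cmod (u i) ^ 2) K.
Proof.
  induction K as [|K IH]; intros H; [now rewrite sum_O, sum_O_R|].
  rewrite sum_Sn_C, sum_Sn_R. destruct (Ceq_dec (u (S K)) (RtoC 0)) as [E|E].
  - rewrite E, Cplus_0_r, Cmod_0, IH by (intros; apply H; lia). ring_R.
  - assert (Z : forall i, (i <= K)%nat -> u i = RtoC 0).
    { intros i Hi. destruct (H i (S K)) as [A|A]; auto; try lia. congruence. }
    rewrite sum_n_C_zero, Cplus_0_l by exact Z.
    rewrite (sum_n_ext_loc _ (fun _ => 0)), sum_n_const; [ring_R|].
    intros n Hn. rewrite Z, Cmod_0 by exact Hn. simpl. ring.
Qed.

Lemma sum_n_R_nonneg (a : nat -> R) N : (forall n, 0 <= a n) -> 0 <= sum_n a N.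
Proof. intros H. induction N; [rewrite sum_O_R | rewrite sum_Sn_R; specialize (H (S N))]; auto; lra. Qed.

Lemma sum_n_R_le (a b : nat -> R) N : (forall n, (n <= N)%nat -> a n <= b n) -> (sum_n a N : R) <= sum_n b N.
Proof.
  intros H. induction N as [|N IH]; [rewrite !sum_O_R; auto|].
  rewrite !sum_Sn_R. specialize (IH ltac:(intros; apply H; lia)). specialize (H (S N) ltac:(lia)). lra.
Qed.

Lemma sum_n_R_le_const (a : nat -> R) c N : (forall n, (n <= N)%nat -> a n <= c) -> sum_n a N <= INR (S N) * c.
Proof. intros H. rewrite <- sum_n_const. now apply sum_n_R_le. Qed.

Lemma sum_n_R_plus (a b : nat -> R) N : (sum_n (fun n => a n + b n) N : R) = sum_n a N + sum_n b N.
Proof. exact (sum_n_plus a b N). Qed.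

Lemma sum_n_R_mult_l (c : R) (a : nat -> R) N : (sum_n (fun n => c * a n) N : R) = c * sum_n a N.
Proof. exact (sum_n_mult_l (K := R_Ring) c a N). Qed.

Lemma sum_n_R_mult_r (c : R) (a : nat -> R) N : (sum_n (fun n => a n * c) N : R) = sum_n a N * c.
Proof. exact (sum_n_mult_r (K := R_Ring) c a N). Qed.

Lemma sum_n_R_term_le (a : nat -> R) j M : (forall n, 0 <= a n) -> (j <= M)%nat -> a j <= sum_n a M.
Proof.
  intros Ha H. induction H as [|M _ IH].
  - destruct j; [rewrite sum_O_R; lra|]. rewrite sum_Sn_R. pose proof (sum_n_R_nonneg a j Ha). lra.
  - rewrite sum_Sn_R. specialize (Ha (S M)). lra.
Qed.

Lemma sum_n_sq_le (t : nat -> R) K : (sum_n t K) ^ 2 <= INR (S K) * sum_n (fun i => t i ^ 2) K.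
Proof.
  induction K as [|K IH]; [rewrite !sum_O_R; simpl; lra|].
  rewrite !sum_Sn_R, (S_INR (S K)).
  (* [2 s t <= S + (K+1) t^2] summed termwise from [2 t_i t <= t_i^2 + t^2] *)
  assert (Hcross : 2 * t (S K) * sum_n t K <= sum_n (fun i => t i ^ 2) K + INR (S K) * t (S K) ^ 2).
  { rewrite <- sum_n_R_mult_l, <- sum_n_const, <- sum_n_R_plus.
    apply sum_n_R_le. intros n _. pose proof (pow2_ge_0 (t n - t (S K))). simpl in *. nra. }
  assert (0 <= sum_n (fun i => t i ^ 2) K) by (apply sum_n_R_nonneg; intro; apply pow2_ge_0).
  pose proof (pos_INR (S K)). simpl in *. nra.
Qed.

Lemma nat_above (r : R) : exists N : nat, r < INR N.
Proof.
  destruct (archimed r) as [H _]. exists (Z.to_nat (up r)).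
  destruct (Z.le_gt_cases 0 (up r)) as [Hz|Hz].
  - now rewrite INR_IZR_INZ, Z2Nat.id.
  - apply IZR_lt in Hz. pose proof (pos_INR (Z.to_nat (up r))). lra.
Qed.

Lemma eventually_forall_le (P : nat -> nat -> Prop) D :
  (forall x, (x <= D)%nat -> exists M, forall M', (M <= M')%nat -> P x M') ->
  exists M, forall x, (x <= D)%nat -> forall M', (M <= M')%nat -> P x M'.
Proof.
  induction D as [|D IH]; intros H.
  - destruct (H 0%nat ltac:(lia)) as [M HM]. exists M. intros x Hx. now replace x with 0%nat by lia.
  - destruct IH as [M1 H1]; [intros; apply H; lia|].
    destruct (H (S D) ltac:(lia)) as [M2 H2]. exists (max M1 M2). intros x Hx M' HM'.
    destruct (Nat.eq_dec x (S D)) as [->|]; [apply H2 | apply H1]; lia.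
Qed.

Lemma nonneg_series_bounded (a : nat -> R) B : (forall n, 0 <= a n) -> (forall N, sum_n a N <= B) ->
  ex_series a /\ Series a <= B.
Proof.
  intros Ha HB.
  assert (Hinc : forall n, sum_n a n <= sum_n a (S n)) by (intro n; rewrite sum_Sn_R; specialize (Ha (S n)); lra).
  destruct (ex_finite_lim_seq_incr _ B Hinc HB) as [l Hl].
  assert (Hs : is_series a l) by exact Hl.
  split; [now exists l|].
  rewrite (is_series_unique _ _ Hs).
  apply (is_lim_seq_le _ _ l B HB Hl (is_lim_seq_const B)).
Qed.

Lemma sum_n_le_Series (a : nat -> R) N : (forall n, 0 <= a n) -> ex_series a -> sum_n a N <= Series a.
Proof.
  intros Ha He. apply (is_lim_seq_incr_compare (sum_n a)); [exact (Series_correct _ He)|].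
  intro n. rewrite sum_Sn_R. specialize (Ha (S n)). lra.
Qed.

Lemma Series_nonneg (a : nat -> R) : (forall n, 0 <= a n) -> ex_series a -> 0 <= Series a.
Proof. intros Ha He. pose proof (sum_n_le_Series a 0 Ha He). rewrite sum_O_R in H. specialize (Ha 0%nat). lra. Qed.

Lemma Series_finite_support (a : nat -> R) D : (forall n, (D < n)%nat -> a n = 0) ->
  ex_series a /\ Series a = sum_n a D.
Proof.
  intros H.
  assert (Hs : is_series a (sum_n a D)).
  { change (is_lim_seq (sum_n a) (sum_n a D)).
    apply (is_lim_seq_ext_loc (fun _ => sum_n a D)); [|apply is_lim_seq_const].
    exists D. intros n Hn. induction Hn as [|n Hn IH]; [reflexivity|].
    rewrite sum_Sn_R, H, <- IH by lia. symmetry. apply Rplus_0_r. }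
  split; [eexists; eauto | now apply is_series_unique].
Qed.

Lemma Series_comparison (a b : nat -> R) : (forall n, 0 <= a n <= b n) -> ex_series b ->
  ex_series a /\ Series a <= Series b.
Proof.
  intros H Hb. split; [|now apply Series_le].
  apply (ex_series_le a b); auto. intro n. unfold norm. simpl. rewrite Rabs_pos_eq; apply H.
Qed.

Definition tail_from (T : nat) (a : nat -> R) : nat -> R := fun n => if (n <=? T)%nat then 0 else a n.

Lemma tail_from_nonneg T (a : nat -> R) : (forall n, 0 <= a n) -> forall n, 0 <= tail_from T a n.
Proof. intros Ha n. unfold tail_from. destruct (n <=? T)%nat; auto; lra. Qed.

Lemma Series_tail_small (a : nat -> R) eps : (forall n, 0 <= a n) -> ex_series a -> 0 < eps ->
  exists T, forall T', (T <= T')%nat -> Series (tail_from T' a) < eps.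
Proof.
  intros Ha He Heps.
  assert (Hc : is_lim_seq (sum_n a) (Series a)) by exact (Series_correct _ He).
  apply is_lim_seq_spec in Hc.
  destruct (Hc (mkposreal (eps / 2) ltac:(lra))) as [T HT]. simpl in HT.
  exists T. intros T' HT'.
  assert (Hsplit : forall N, sum_n (tail_from T' a) N + sum_n a T' <= sum_n a (max N T')).
  { induction N as [|N IH].
    - rewrite sum_O_R. unfold tail_from. simpl. lra.
    - rewrite sum_Sn_R. unfold tail_from at 2. destruct (Nat.leb_spec (S N) T').
      + rewrite !Nat.max_r in * by lia. lra.
      + rewrite Nat.max_l by lia. rewrite Nat.max_l in IH by lia. rewrite sum_Sn_R. lra. }
  assert (Hb : forall N, sum_n (tail_from T' a) N <= Series a - sum_n a T').
  { intro N. pose proof (sum_n_le_Series a (max N T') Ha He). specialize (Hsplit N). lra. }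
  destruct (nonneg_series_bounded _ _ (tail_from_nonneg T' a Ha) Hb) as [_ Hle].
  specialize (HT T' HT'). apply Rabs_def2 in HT. lra.
Qed.

Lemma Series_subsequence_le (a : nat -> R) (phi : nat -> nat) T : (forall n, 0 <= a n) -> ex_series a ->
  (forall k, (phi k < phi (S k))%nat) -> (T < phi 0)%nat ->
  ex_series (fun k => a (phi k)) /\ Series (fun k => a (phi k)) <= Series (tail_from T a).
Proof.
  intros Ha He Hphi HT. set (a' := tail_from T a).
  assert (Ha' : forall n, 0 <= a' n) by now apply tail_from_nonneg.
  assert (He' : ex_series a').
  { apply (Series_comparison a' a); auto. intro n. split; auto. unfold a', tail_from. destruct (n <=? T)%nat; auto; lra. }
  assert (Hphi_gt : forall k, (T < phi k)%nat) by (induction k; [|specialize (Hphi k)]; lia).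
  assert (Heq : forall k, a (phi k) = a' (phi k)).
  { intro k. unfold a', tail_from. specialize (Hphi_gt k). destruct (Nat.leb_spec (phi k) T); [lia | reflexivity]. }
  assert (Hp : forall K, sum_n (fun k => a (phi k)) K <= sum_n a' (phi K)).
  { induction K as [|K IH].
    - rewrite sum_O_R, Heq. now apply sum_n_R_term_le.
    - rewrite sum_Sn_R, Heq.
      assert (Hgap : forall M, (phi K < M)%nat -> sum_n a' (phi K) + a' M <= sum_n a' M).
      { induction 1 as [|M _ IHM]; rewrite sum_Sn_R; [lra|]. pose proof (Ha' M). pose proof (Ha' (S M)). lra. }
      specialize (Hgap _ (Hphi K)). lra. }
  apply nonneg_series_bounded; [intro; auto|].
  intro K. eapply Rle_trans; [apply Hp | now apply sum_n_le_Series].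
Qed.

Lemma Series_sum_n (G : nat -> nat -> R) K : (forall i, (i <= K)%nat -> ex_series (G i)) ->
  ex_series (fun n => sum_n (fun i => G i n) K) /\
  Series (fun n => sum_n (fun i => G i n) K) = sum_n (fun i => Series (G i)) K.
Proof.
  induction K as [|K IH]; intros H.
  - rewrite sum_O_R. split.
    + apply (ex_series_ext (G 0%nat)); [intro; now rewrite sum_O_R | apply H; lia].
    + apply Series_ext. intro n. apply sum_O_R.
  - destruct IH as [H1 H2]; [intros; apply H; lia|].
    assert (E : forall n, sum_n (fun i => G i n) (S K) = sum_n (fun i => G i n) K + G (S K) n)
      by (intro; apply sum_Sn_R).
    split.
    + apply (ex_series_ext _ _ (fun n => eq_sym (E n))).
      apply (ex_series_plus (V := R_NormedModule)); auto.
    + rewrite (Series_ext _ _ E), Series_plus, H2, sum_Sn_R; auto.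
Qed.

Lemma geometric_tail j : ex_series (fun k => (/ 2) ^ (j + S k)) /\ Series (fun k => (/ 2) ^ (j + S k)) = (/ 2) ^ j.
Proof.
  assert (E : forall k, (/ 2) ^ (j + S k) = (/ 2) ^ (S j) * (/ 2) ^ k) by (intro k; rewrite <- pow_add; f_equal; lia).
  assert (Hg : is_series (fun k => (/ 2) ^ k) (/ (1 - / 2))) by (apply is_series_geom; rewrite Rabs_pos_eq; lra).
  split.
  - apply (ex_series_ext _ _ (fun k => eq_sym (E k))).
    apply (ex_series_scal_l (V := R_NormedModule)). eexists; eauto.
  - rewrite (Series_ext _ _ E), Series_scal_l.
    replace (Series (pow (/ 2))) with (/ (1 - / 2)) by (symmetry; now apply is_series_unique).
    simpl. field.
Qed.

Lemma half_pow_small d : 0 < d -> exists J, (/ 2) ^ J < d.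
Proof.
  intros Hd. pose proof (is_lim_seq_geom (/ 2) ltac:(rewrite Rabs_pos_eq; lra)) as H.
  apply is_lim_seq_spec in H. destruct (H (mkposreal d Hd)) as [J HJ]. exists J.
  specialize (HJ J (le_n J)). simpl in HJ. rewrite Rminus_0_r, Rabs_pos_eq in HJ; [exact HJ|].
  apply pow_le. lra.
Qed.

Lemma half_pow_antitone J j : (J <= j)%nat -> (/ 2) ^ j <= (/ 2) ^ J.
Proof.
  intros H. rewrite !pow_inv. apply Rinv_le_contravar; [apply pow_lt; lra | apply Rle_pow; [lra | exact H]].
Qed.

Lemma ex_series_poly_geom s : 0 < s < 1 -> ex_series (fun n => INR (S n) * INR (S n) * s ^ n).
Proof.
  intros Hs. set (a := fun n => INR (S n) * INR (S n) * s ^ n).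
  assert (Hpos : forall n, 0 < a n)
    by (intro n; apply Rmult_lt_0_compat; [apply Rmult_lt_0_compat; apply lt_0_INR; lia | apply pow_lt; lra]).
  assert (Hinv : is_lim_seq (fun n => / INR (S n)) 0).
  { assert (H1 : is_lim_seq (fun n => INR (S n)) p_infty) by (apply (is_lim_seq_incr_1 INR), is_lim_seq_INR).
    exact (is_lim_seq_inv _ _ H1 ltac:(discriminate)). }
  assert (Hq : is_lim_seq (fun n => 1 + / INR (S n)) 1).
  { pose proof (is_lim_seq_plus' _ _ 1 0 (is_lim_seq_const 1) Hinv) as Hq. now rewrite Rplus_0_r in Hq. }
  assert (Hr : is_lim_seq (fun n => (1 + / INR (S n)) * (1 + / INR (S n)) * s) s).
  { pose proof (is_lim_seq_mult' _ _ _ s (is_lim_seq_mult' _ _ 1 1 Hq Hq) (is_lim_seq_const s)) as Hr.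
    now replace (1 * 1 * s) with s in Hr by ring. }
  apply (ex_series_ext (fun n => Rabs (a n))); [intro n; apply Rabs_pos_eq; left; auto|].
  apply (ex_series_DAlembert a s); [lra | intro n; specialize (Hpos n); lra|].
  refine (is_lim_seq_ext _ _ _ _ Hr). intro n.
  unfold a. rewrite Rabs_pos_eq, (S_INR (S n)); simpl pow.
  - pose proof (lt_0_INR (S n) ltac:(lia)). pose proof (pow_lt s n ltac:(lra)). field. lra.
  - left. apply Rdiv_lt_0_compat; apply Hpos.
Qed.

(** * Coefficient sequences, the operator [T] and its right inverse *)

Definition czero : coeffs := fun _ => RtoC 0.

Definition cadd (f g : coeffs) : coeffs := fun n => Cplus (f n) (g n).

Definition cscal (a : C) (f : coeffs) : coeffs := fun n => Cmult a (f n).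

Definition csum (F : nat -> coeffs) (K : nat) : coeffs := fun n => sum_n (fun i => F i n) K.

Definition monom (x : nat) : coeffs := fun n => if Nat.eqb n x then RtoC 1 else RtoC 0.

Definition dilate (f : coeffs) : coeffs := fun n => if Nat.even n then f (n / 2)%nat else RtoC 0.

Definition low3 (f : coeffs) := forall n, (n < 3)%nat -> f n = RtoC 0.

Definition supp_in (f : coeffs) (lo hi : nat) := forall m, (m < lo \/ hi < m)%nat -> f m = RtoC 0.

Lemma supp_in_low3 f D : supp_in f 3 D -> low3 f.
Proof. intros H n Hn. apply H. lia. Qed.

Lemma monom_other x n : n <> x -> monom x n = RtoC 0.
Proof. intros H. unfold monom. apply Nat.eqb_neq in H. now rewrite H. Qed.

Lemma monom_low3 x : (3 <= x)%nat -> low3 (monom x).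
Proof. intros Hx n Hn. apply monom_other. lia. Qed.

Lemma csub_add f g h : csub f h = cadd (csub f g) (csub g h).
Proof. apply functional_extensionality. intro n. unfold csub, cadd. ring_C. Qed.

Lemma csub_diag f : csub f f = czero.
Proof. apply functional_extensionality. intro n. unfold csub, czero. ring_C. Qed.

Lemma csub_as_cadd f g : csub f g = cadd f (cscal (Copp (RtoC 1)) g).
Proof. apply functional_extensionality. intro n. unfold csub, cadd, cscal. ring_C. Qed.

Lemma cscal_0 f : cscal (RtoC 0) f = czero.
Proof. apply functional_extensionality. intro n. unfold cscal, czero. ring_C. Qed.

Lemma cadd_czero_l f : cadd czero f = f.
Proof. apply functional_extensionality. intro n. unfold cadd, czero. ring_C. Qed.

Lemma csum_S F K : csum F (S K) = cadd (csum F K) (F (S K)).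
Proof. apply functional_extensionality. intro n. exact (sum_Sn (fun i => F i n) K). Qed.

Lemma csum_O F : csum F 0 = F 0%nat.
Proof. apply functional_extensionality. intro n. exact (sum_O (fun i => F i n)). Qed.

Lemma Top_cadd f g : Top (cadd f g) = cadd (Top f) (Top g).
Proof.
  apply functional_extensionality; intro m. unfold Top, cadd. destruct (3 <=? m)%nat; [|ring_C].
  rewrite <- sum_n_Cplus. apply sum_n_ext. intro j. destruct andb; [reflexivity | ring_C].
Qed.

Lemma Top_cscal a f : Top (cscal a f) = cscal a (Top f).
Proof.
  apply functional_extensionality; intro m. unfold Top, cscal. destruct (3 <=? m)%nat; [|ring_C].
  rewrite <- sum_n_Cmult_l. apply sum_n_ext. intro j. destruct andb; [reflexivity | ring_C].
Qed.

Lemma Top_czero : Top czero = czero.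
Proof. rewrite <- (cscal_0 czero), Top_cscal. rewrite !cscal_0. reflexivity. Qed.

Lemma Top_low3 f : low3 (Top f).
Proof. intros n Hn. unfold Top. replace (3 <=? n)%nat with false; [reflexivity|]. symmetry. apply Nat.leb_gt. lia. Qed.

Lemma Top_monom y m : (3 <= y)%nat ->
  Top (monom y) m = if andb (3 <=? m)%nat (Tcol y =? m)%nat then RtoC 1 else RtoC 0.
Proof.
  intros Hy. unfold Top. destruct (3 <=? m)%nat; [cbn [andb]|reflexivity].
  destruct (Nat.le_gt_cases y (2 * m)) as [Hym|Hym].
  - rewrite (sum_n_C_single _ _ y Hym).
    + unfold monom. rewrite Nat.eqb_refl. replace (3 <=? y)%nat with true by (symmetry; apply Nat.leb_le; lia).
      reflexivity.
    + intros j _ Hj. rewrite monom_other by exact Hj. now destruct andb.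
  - rewrite sum_n_C_zero.
    + pose proof (Tcol_ge_half y). destruct (Nat.eqb_spec (Tcol y) m); [lia | reflexivity].
    + intros j Hj. rewrite monom_other by lia. now destruct andb.
Qed.

Lemma Top_monom_Tcol y y' : (3 <= y)%nat -> (3 <= y')%nat -> Tcol y = Tcol y' ->
  Top (monom y) = Top (monom y').
Proof. intros Hy Hy' E. apply functional_extensionality. intro m. now rewrite !Top_monom, E. Qed.

Lemma Top_monom_4 : Top (monom 4) = czero.
Proof.
  apply functional_extensionality. intro m. rewrite Top_monom by lia. unfold czero.
  change (Tcol 4) with 2%nat. destruct (Nat.leb_spec 3 m); [|reflexivity].
  destruct (Nat.eqb_spec 2 m); [lia | now rewrite Bool.andb_false_r].
Qed.

Lemma dilate_low3 f : low3 f -> low3 (dilate f).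
Proof.
  intros Hf n Hn. unfold dilate. destruct (Nat.even n) eqn:E; [|reflexivity].
  apply Hf. pose proof (even_div2 n E). lia.
Qed.

Lemma Top_dilate f : low3 f -> Top (dilate f) = f.
Proof.
  intros Hf. apply functional_extensionality; intro m. unfold Top.
  destruct (Nat.leb_spec 3 m) as [Hm|Hm]; [|symmetry; apply Hf; lia].
  rewrite (sum_n_C_single _ _ (2 * m)); [| lia |].
  - replace (3 <=? 2 * m)%nat with true by (symmetry; apply Nat.leb_le; lia).
    rewrite Tcol_double, Nat.eqb_refl. unfold dilate. now rewrite Nat.even_even, div2_double.
  - intros j _ Hj. destruct (andb (3 <=? j)%nat (Tcol j =? m)%nat) eqn:E; [|reflexivity].
    apply andb_prop in E as [_ E]. apply Nat.eqb_eq in E.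
    unfold dilate. destruct (Nat.even j) eqn:Ej; [|reflexivity].
    exfalso. apply Hj. now apply Tcol_even_eq.
Qed.

Lemma dilate_monom x : dilate (monom x) = monom (2 * x).
Proof.
  apply functional_extensionality; intro n. unfold dilate, monom.
  destruct (Nat.even n) eqn:E.
  - pose proof (even_div2 n E).
    destruct (Nat.eqb_spec (n / 2) x), (Nat.eqb_spec n (2 * x)); reflexivity || lia.
  - pose proof (odd_div2 n E). destruct (Nat.eqb_spec n (2 * x)); reflexivity || lia.
Qed.

Lemma dilate_supp f lo hi : supp_in f lo hi -> supp_in (dilate f) (2 * lo) (2 * hi).
Proof.
  intros H m Hm. unfold dilate. destruct (Nat.even m) eqn:E; [|reflexivity].
  pose proof (even_div2 m E). apply H. lia.
Qed.

Lemma iter_dilate_low3 k f : low3 f -> low3 (Nat.iter k dilate f).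
Proof. intros Hf. induction k; simpl; auto using dilate_low3. Qed.

Lemma iter_Top_dilate k f : low3 f -> Nat.iter k Top (Nat.iter k dilate f) = f.
Proof.
  intros Hf. induction k as [|k IH]; [reflexivity|].
  rewrite Nat.iter_succ_r, Nat.iter_succ, Top_dilate by auto using iter_dilate_low3. exact IH.
Qed.

Lemma iter_Top_dilate_le j k f : low3 f -> (k <= j)%nat ->
  Nat.iter j Top (Nat.iter k dilate f) = Nat.iter (j - k) Top f.
Proof.
  intros Hf H. replace (Nat.iter j Top) with (Nat.iter ((j - k) + k) Top) by (f_equal; lia).
  rewrite Nat.iter_add, iter_Top_dilate; auto.
Qed.

Lemma iter_dilate_monom k x : Nat.iter k dilate (monom x) = monom (2 ^ k * x).
Proof.
  induction k as [|k IH]; simpl.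
  - f_equal. lia.
  - rewrite IH, dilate_monom. f_equal. lia.
Qed.

Lemma iter_dilate_supp n f lo hi : supp_in f lo hi -> supp_in (Nat.iter n dilate f) (2 ^ n * lo) (2 ^ n * hi).
Proof.
  intros H. induction n as [|n IH].
  - simpl Nat.iter. rewrite Nat.pow_0_r, !Nat.mul_1_l. exact H.
  - rewrite Nat.iter_succ, Nat.pow_succ_r', <- !Nat.mul_assoc. now apply dilate_supp.
Qed.

Lemma iter_Top_cadd k f g : Nat.iter k Top (cadd f g) = cadd (Nat.iter k Top f) (Nat.iter k Top g).
Proof. induction k as [|k IH]; [reflexivity|]. simpl. rewrite IH. apply Top_cadd. Qed.

Lemma iter_Top_cscal k a f : Nat.iter k Top (cscal a f) = cscal a (Nat.iter k Top f).
Proof. induction k as [|k IH]; [reflexivity|]. simpl. rewrite IH. apply Top_cscal. Qed.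

Lemma iter_Top_czero k : Nat.iter k Top czero = czero.
Proof. induction k as [|k IH]; [reflexivity|]. simpl. rewrite IH. apply Top_czero. Qed.

Lemma iter_Top_csub k f g : Nat.iter k Top (csub f g) = csub (Nat.iter k Top f) (Nat.iter k Top g).
Proof. rewrite !csub_as_cadd, iter_Top_cadd, iter_Top_cscal. reflexivity. Qed.

Lemma iter_Top_czero_le K K' f : Nat.iter K Top f = czero -> (K <= K')%nat -> Nat.iter K' Top f = czero.
Proof.
  intros H HK. replace (Nat.iter K' Top) with (Nat.iter ((K' - K) + K) Top) by (f_equal; lia).
  rewrite Nat.iter_add, H. apply iter_Top_czero.
Qed.

Lemma iter_Top_low3 N f : low3 f -> low3 (Nat.iter N Top f).
Proof. intros H. destruct N; [exact H | apply Top_low3]. Qed.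

(** * Polynomials killed by a power of [T] *)

Definition nilpoly (f : coeffs) : Prop :=
  (exists D, supp_in f 3 D) /\ exists K, Nat.iter K Top f = czero.

Lemma supp_in_cadd f g D1 D2 : supp_in f 3 D1 -> supp_in g 3 D2 -> supp_in (cadd f g) 3 (D1 + D2).
Proof. intros Hf Hg m Hm. unfold cadd. rewrite Hf, Hg by lia. ring_C. Qed.

Lemma supp_in_cscal a f D : supp_in f 3 D -> supp_in (cscal a f) 3 D.
Proof. intros Hf m Hm. unfold cscal. rewrite Hf by lia. ring_C. Qed.

Lemma nilpoly_czero : nilpoly czero.
Proof. split; exists 0%nat; [intros m _|]; reflexivity. Qed.

Lemma nilpoly_cadd f g : nilpoly f -> nilpoly g -> nilpoly (cadd f g).
Proof.
  intros [[Df Hf] [Kf Tf]] [[Dg Hg] [Kg Tg]]. split.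
  - exists (Df + Dg)%nat. now apply supp_in_cadd.
  - exists (Kf + Kg)%nat.
    rewrite iter_Top_cadd, (iter_Top_czero_le Kf _ f), (iter_Top_czero_le Kg _ g) by (auto; lia).
    apply cadd_czero_l.
Qed.

Lemma nilpoly_cscal a f : nilpoly f -> nilpoly (cscal a f).
Proof.
  intros [[D Hf] [K Tf]]. split.
  - exists D. now apply supp_in_cscal.
  - exists K. rewrite iter_Top_cscal, Tf. apply functional_extensionality. intro n. unfold cscal, czero. ring_C.
Qed.

Lemma nilpoly_csum F K : (forall i, (i <= K)%nat -> nilpoly (F i)) -> nilpoly (csum F K).
Proof.
  induction K as [|K IH]; intros H.
  - rewrite csum_O. auto.
  - rewrite csum_S. apply nilpoly_cadd; auto.
Qed.

(* [T] maps [z^(2^n)] down to [z^4], and [T(4) = 2] leaves the space. *)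
Lemma iter_Top_monom_pow2 n : (2 <= n)%nat -> Nat.iter (S n) Top (monom (2 ^ n)) = czero.
Proof.
  intros Hn.
  replace (monom (2 ^ n)) with (Nat.iter (n - 2) dilate (monom 4)).
  - rewrite iter_Top_dilate_le by (apply monom_low3 || idtac; lia).
    replace (S n - (n - 2))%nat with 3%nat by lia.
    simpl. now rewrite Top_monom_4, !Top_czero.
  - rewrite iter_dilate_monom. f_equal.
    replace (2 ^ n)%nat with (2 ^ (n - 2) * 2 ^ 2)%nat by (rewrite <- Nat.pow_add_r; f_equal; lia).
    reflexivity.
Qed.

Lemma nilpoly_monom_diff x y K : (3 <= x)%nat -> (3 <= y)%nat ->
  Nat.iter K Top (monom x) = Nat.iter K Top (monom y) -> nilpoly (csub (monom x) (monom y)).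
Proof.
  intros Hx Hy E. split.
  - exists (x + y)%nat. rewrite csub_as_cadd. apply supp_in_cadd; [|apply supp_in_cscal];
      intros m Hm; apply monom_other; lia.
  - exists K. now rewrite iter_Top_csub, E, csub_diag.
Qed.

(* Writing [x = 2^n b] with [b] odd: if [b >= 3] then [z^x] and [z^(2^n (3b+1))] have the same
   image under [T^(n+1)], and if [b = 1] then both [z^x] and [z^(4x)] are killed by a power of [T]. *)
Lemma monom_nil_partner x : exists y, (x < y)%nat /\ ((3 <= x)%nat -> nilpoly (csub (monom x) (monom y))).
Proof.
  destruct (Nat.lt_ge_cases x 3) as [Hx|Hx]; [exists (S x); split; lia|].
  destruct (odd_part_decomp x) as [n [b [Hb ->]]]; [lia|].
  pose proof (odd_div2 b Hb). pose proof (Nat.pow_nonzero 2 n ltac:(lia)).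
  destruct (Nat.eq_dec b 1) as [->|Hb1].
  - assert (2 <= n)%nat by (destruct n as [|[|n]]; simpl in Hx; lia).
    exists (2 ^ (n + 2))%nat. rewrite Nat.pow_add_r, Nat.mul_1_r. split; [simpl; lia|]. intros _.
    apply nilpoly_monom_diff with (S (n + 2)); [lia | simpl; lia |].
    rewrite <- Nat.pow_add_r, iter_Top_monom_pow2 by lia.
    apply iter_Top_czero_le with (S n); [apply iter_Top_monom_pow2 |]; lia.
  - exists (2 ^ n * (3 * b + 1))%nat. split; [nia|]. intros _.
    apply nilpoly_monom_diff with (S n); [nia | nia |].
    rewrite <- !iter_dilate_monom, !iter_Top_dilate_le by (apply monom_low3 || idtac; lia).
    replace (S n - n)%nat with 1%nat by lia.
    apply Top_monom_Tcol; [lia | lia | symmetry; now apply Tcol_odd_3S1].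
Qed.

Definition collatz_partner (x : nat) : nat :=
  proj1_sig (constructive_indefinite_description _ (monom_nil_partner x)).

Lemma collatz_partner_spec x : (x < collatz_partner x)%nat /\
  ((3 <= x)%nat -> nilpoly (csub (monom x) (monom (collatz_partner x)))).
Proof. unfold collatz_partner. now destruct constructive_indefinite_description. Qed.

Definition partner_chain (i x : nat) : nat := Nat.iter i collatz_partner x.

Lemma partner_chain_lt i j x : (i < j)%nat -> (partner_chain i x < partner_chain j x)%nat.
Proof.
  induction 1 as [|j _ IH]; unfold partner_chain in *; simpl;
    [|etransitivity; [exact IH|]]; apply collatz_partner_spec.
Qed.

Lemma partner_chain_injective x i j : i <> j -> partner_chain i x <> partner_chain j x.
Proof.
  intros H. destruct (Nat.lt_gt_cases i j) as [[A|A] _]; auto;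
    [pose proof (partner_chain_lt i j x A) | pose proof (partner_chain_lt j i x A)]; lia.
Qed.

Lemma partner_chain_nilpoly i x : (3 <= x)%nat -> nilpoly (csub (monom x) (monom (partner_chain i x))).
Proof.
  intros Hx. induction i as [|i IH].
  - rewrite csub_diag. apply nilpoly_czero.
  - rewrite (csub_add _ (monom (partner_chain i x))). apply nilpoly_cadd; [exact IH|].
    apply collatz_partner_spec. destruct i; [exact Hx|].
    pose proof (partner_chain_lt 0 (S i) x). unfold partner_chain in *. simpl in *. lia.
Qed.

Definition chain_avg (L x : nat) : coeffs :=
  csum (fun i => cscal (RtoC (/ INR L)) (monom (partner_chain (S i) x))) (L - 1).

Definition nil_monom (L x : nat) : coeffs := csub (monom x) (chain_avg L x).

Lemma nil_monom_nilpoly L x : (1 <= L)%nat -> (3 <= x)%nat -> nilpoly (nil_monom L x).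
Proof.
  intros HL Hx.
  replace (nil_monom L x) with
    (cscal (RtoC (/ INR L)) (csum (fun i => csub (monom x) (monom (partner_chain (S i) x))) (L - 1))).
  - apply nilpoly_cscal, nilpoly_csum. intros. now apply partner_chain_nilpoly.
  - apply functional_extensionality. intro n. unfold nil_monom, chain_avg, csum, cscal, csub.
    rewrite sum_n_Cminus, sum_n_C_const, sum_n_Cmult_l.
    replace (S (L - 1)) with L by lia.
    assert (INR L <> 0) by (apply not_0_INR; lia).
    generalize (sum_n (fun i => monom (partner_chain (S i) x) n) (L - 1)) as s. intros s.
    unfold Cminus. rewrite Cmult_plus_distr_l, Cmult_assoc, <- RtoC_mult, Rinv_l by exact H. ring.
Qed.

(* Both sums run over the exponents [3 <= x <= M + 3]. *)
Definition poly_part (M : nat) (h : nat -> C) : coeffs := csum (fun i => cscal (h (3 + i)%nat) (monom (3 + i))) M.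

Definition nil_part (M L : nat) (h : nat -> C) : coeffs := csum (fun i => cscal (h (3 + i)%nat) (nil_monom L (3 + i))) M.

Lemma nil_part_nilpoly M L h : (1 <= L)%nat -> nilpoly (nil_part M L h).
Proof. intros HL. apply nilpoly_csum. intros i _. apply nilpoly_cscal, nil_monom_nilpoly; lia. Qed.

Lemma poly_part_spec M h m : poly_part M h m = if ((3 <=? m) && (m <=? M + 3))%bool then h m else RtoC 0.
Proof.
  unfold poly_part, csum, cscal. destruct (Nat.leb_spec 3 m), (Nat.leb_spec m (M + 3)); cbn [andb].
  - rewrite (sum_n_C_single _ _ (m - 3)) by (lia || (intros j _ Hj; rewrite monom_other by lia; ring_C)).
    replace (3 + (m - 3))%nat with m by lia. unfold monom. rewrite Nat.eqb_refl. ring_C.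
  - apply sum_n_C_zero. intros j Hj. rewrite monom_other by lia. ring_C.
  - apply sum_n_C_zero. intros j Hj. rewrite monom_other by lia. ring_C.
  - apply sum_n_C_zero. intros j Hj. rewrite monom_other by lia. ring_C.
Qed.

Lemma poly_part_sub_nil_part M L h :
  csub (poly_part M h) (nil_part M L h) = csum (fun i => cscal (h (3 + i)%nat) (chain_avg L (3 + i))) M.
Proof.
  apply functional_extensionality. intro m. unfold csub, poly_part, nil_part, csum.
  rewrite <- sum_n_Cminus. apply sum_n_ext. intro i. unfold cscal, nil_monom, csub. ring_C.
Qed.

Lemma nil_part_sub M L h h' :
  csub (nil_part M L h) (nil_part M L h') = csum (fun i => cscal (Cminus (h (3 + i)%nat) (h' (3 + i)%nat)) (nil_monom L (3 + i))) M.
Proof.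
  apply functional_extensionality. intro m. unfold csub, nil_part, csum.
  rewrite <- sum_n_Cminus. apply sum_n_ext. intro i. unfold cscal. ring_C.
Qed.

(** * Weighted square norms *)

Definition sqsummable (w : nat -> R) (f : coeffs) : Prop := ex_series (wsum w f).

Definition sqnorm (w : nat -> R) (f : coeffs) : R := Series (wsum w f).

Definition disjoint (u : nat -> coeffs) : Prop := forall i j m, i <> j -> u i m = RtoC 0 \/ u j m = RtoC 0.

Lemma wsum_csub_comm w f g : wsum w (csub f g) = wsum w (csub g f).
Proof.
  apply functional_extensionality. intro n. unfold wsum, csub.
  replace (Cminus (f n) (g n)) with (Copp (Cminus (g n) (f n))) by ring_C. now rewrite Cmod_opp.
Qed.

Lemma sqnorm_finite_support w f D : (forall n, (D < n)%nat -> f n = RtoC 0) ->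
  sqsummable w f /\ sqnorm w f = sum_n (wsum w f) D.
Proof.
  intros H. apply Series_finite_support. intros n Hn. unfold wsum. rewrite H, Cmod_0 by exact Hn.
  unfold Rdiv. ring.
Qed.

Lemma sqnorm_monom w y : sqsummable w (monom y) /\ sqnorm w (monom y) = / w y.
Proof.
  destruct (sqnorm_finite_support w (monom y) y) as [H1 H2]; [intros; apply monom_other; lia|].
  split; auto. rewrite H2.
  assert (Hz : forall n, n <> y -> wsum w (monom y) n = 0)
    by (intros n Hn; unfold wsum; rewrite monom_other, Cmod_0 by exact Hn; unfold Rdiv; ring).
  assert (Hy : wsum w (monom y) y = / w y) by (unfold wsum, monom; rewrite Nat.eqb_refl, Cmod_1; unfold Rdiv; ring).
  destruct y as [|y]; [now rewrite sum_O_R|].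
  rewrite sum_Sn_R, Hy, (sum_n_ext_loc _ (fun _ => 0)), sum_n_const; [ring_R|].
  intros n Hn. apply Hz. lia.
Qed.

Section WeightedNorm.

Variable w : nat -> R.
Hypothesis w_pos : forall n, 0 < w n.

Lemma wsum_nonneg f n : 0 <= wsum w f n.
Proof. apply Rdiv_le_0_compat; [apply pow2_ge_0 | apply w_pos]. Qed.

Lemma sqnorm_nonneg f : sqsummable w f -> 0 <= sqnorm w f.
Proof. apply Series_nonneg, wsum_nonneg. Qed.

Lemma sqnorm_le_series f (b : nat -> R) : (forall n, wsum w f n <= b n) -> ex_series b ->
  sqsummable w f /\ sqnorm w f <= Series b.
Proof. intros H. apply Series_comparison. intro n. split; [apply wsum_nonneg | apply H]. Qed.

Lemma sqnorm_cadd_le f g : sqsummable w f -> sqsummable w g ->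
  sqsummable w (cadd f g) /\ sqnorm w (cadd f g) <= 2 * sqnorm w f + 2 * sqnorm w g.
Proof.
  intros Hf Hg.
  assert (Hpt : forall n, wsum w (cadd f g) n <= 2 * wsum w f n + 2 * wsum w g n).
  { intro n. unfold wsum, cadd, Rdiv.
    assert (Cmod (Cplus (f n) (g n)) ^ 2 <= 2 * Cmod (f n) ^ 2 + 2 * Cmod (g n) ^ 2).
    { pose proof (Cmod_triangle (f n) (g n)). pose proof (Cmod_ge_0 (Cplus (f n) (g n))).
      pose proof (pow2_ge_0 (Cmod (f n) - Cmod (g n))). simpl in *. nra. }
    pose proof (Rinv_0_lt_compat _ (w_pos n)). nra. }
  assert (Hf2 : ex_series (fun n => 2 * wsum w f n)) by now apply (ex_series_scal_l (V := R_NormedModule)).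
  assert (Hg2 : ex_series (fun n => 2 * wsum w g n)) by now apply (ex_series_scal_l (V := R_NormedModule)).
  destruct (sqnorm_le_series _ _ Hpt (ex_series_plus (V := R_NormedModule) _ _ Hf2 Hg2)) as [H1 H2].
  split; auto. unfold sqnorm. now rewrite Series_plus, !Series_scal_l in H2.
Qed.

Lemma sqnorm_cscal a f : sqsummable w f ->
  sqsummable w (cscal a f) /\ sqnorm w (cscal a f) = Cmod a ^ 2 * sqnorm w f.
Proof.
  intros H.
  assert (E : forall n, wsum w (cscal a f) n = Cmod a ^ 2 * wsum w f n)
    by (intro n; unfold wsum, cscal; rewrite Cmod_mult; unfold Rdiv; ring).
  unfold sqsummable, sqnorm. rewrite (Series_ext _ _ E), Series_scal_l. split; [|reflexivity].
  apply (ex_series_ext _ _ (fun n => eq_sym (E n))). now apply (ex_series_scal_l (V := R_NormedModule)).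
Qed.

Lemma sqnorm_csub_triangle f g h : sqsummable w (csub f g) -> sqsummable w (csub g h) ->
  sqsummable w (csub f h) /\ sqnorm w (csub f h) <= 2 * sqnorm w (csub f g) + 2 * sqnorm w (csub g h).
Proof. rewrite (csub_add f g h). apply sqnorm_cadd_le. Qed.

Lemma sqnorm_csum F K : (forall i, (i <= K)%nat -> sqsummable w (F i)) ->
  sqsummable w (csum F K) /\ sqnorm w (csum F K) <= INR (S K) * sum_n (fun i => sqnorm w (F i)) K.
Proof.
  intros HF. destruct (Series_sum_n (fun i => wsum w (F i)) K HF) as [H1 H2].
  unfold sqnorm. rewrite <- H2, <- Series_scal_l.
  apply sqnorm_le_series; [|now apply (ex_series_scal_l (V := R_NormedModule))].
  intro n. unfold wsum, csum, Rdiv. rewrite sum_n_R_mult_r, <- Rmult_assoc.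
  apply Rmult_le_compat_r; [left; apply Rinv_0_lt_compat, w_pos|].
  eapply Rle_trans; [|apply sum_n_sq_le]. apply pow_incr. split; [apply Cmod_ge_0 | apply Cmod_sum_n_le].
Qed.

Lemma sqnorm_csum_disjoint F K : disjoint F -> (forall i, (i <= K)%nat -> sqsummable w (F i)) ->
  sqsummable w (csum F K) /\ sqnorm w (csum F K) = sum_n (fun i => sqnorm w (F i)) K.
Proof.
  intros Hd HF. destruct (Series_sum_n (fun i => wsum w (F i)) K HF) as [H1 H2].
  assert (E : forall n, wsum w (csum F K) n = sum_n (fun i => wsum w (F i) n) K).
  { intro n. unfold wsum, csum, Rdiv. rewrite sum_n_R_mult_r, Cmod_sum_n_disjoint_sq; [reflexivity|].
    intros i j _ _. apply Hd. }
  unfold sqsummable, sqnorm. rewrite (Series_ext _ _ E). split; [|exact H2].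
  exact (ex_series_ext _ _ (fun n => eq_sym (E n)) H1).
Qed.

End WeightedNorm.

Lemma sum_n_wsum_dilate w f M :
  sum_n (wsum w (dilate f)) (2 * M + 1) = sum_n (wsum (fun x => w (2 * x)%nat) f) M.
Proof.
  assert (Hodd : forall k, wsum w (dilate f) (2 * k + 1) = 0).
  { intro k. unfold wsum, dilate. rewrite Nat.even_odd, Cmod_0. unfold Rdiv. ring. }
  assert (Heven : forall k, wsum w (dilate f) (2 * k) = wsum (fun x => w (2 * x)%nat) f k).
  { intro k. unfold wsum, dilate. now rewrite Nat.even_even, div2_double. }
  induction M as [|M IH].
  - change (2 * 0 + 1)%nat with 1%nat. rewrite sum_Sn_R, !sum_O_R, <- (Heven 0%nat).
    change 1%nat with (2 * 0 + 1)%nat. rewrite Hodd, Rplus_0_r. reflexivity.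
  - replace (2 * S M + 1)%nat with (S (S (2 * M + 1))) by lia.
    rewrite !sum_Sn_R, IH. replace (S (2 * M + 1)) with (2 * S M)%nat by lia.
    replace (S (2 * S M)) with (2 * S M + 1)%nat by lia. rewrite Heven, Hodd. ring_R.
Qed.

Lemma sqnorm_iter_dilate w n f D : (forall m, (D < m)%nat -> f m = RtoC 0) ->
  sqsummable w (Nat.iter n dilate f) /\
  sqnorm w (Nat.iter n dilate f) = sum_n (wsum (fun x => w (2 ^ n * x)%nat) f) D.
Proof.
  revert f D. induction n as [|n IH]; intros f D Hf.
  - rewrite (sum_n_ext _ (wsum w f)) by (intro x; unfold wsum; now rewrite Nat.mul_1_l).
    now apply sqnorm_finite_support.
  - assert (Hdf : forall m, (2 * D + 1 < m)%nat -> dilate f m = RtoC 0)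
      by (intros m Hm; apply (dilate_supp f 0 D); [intros k [Hk|Hk]; [lia | now apply Hf] | lia]).
    rewrite Nat.iter_succ_r. destruct (IH (dilate f) _ Hdf) as [H1 H2]. split; [exact H1|].
    rewrite H2, sum_n_wsum_dilate. apply sum_n_ext. intro x. unfold wsum.
    now replace (2 ^ S n * x)%nat with (2 ^ n * (2 * x))%nat by (rewrite Nat.pow_succ_r'; lia).
Qed.

Definition doubling_summable (w : nat -> R) : Prop :=
  forall k, (3 <= k)%nat -> ex_series (fun n => / w (k * 2 ^ n)%nat).

Lemma Cmod_bounded_of_supp f D : supp_in f 3 D -> exists B : nat, forall x, Cmod (f x) <= INR B.
Proof.
  intros H. destruct (nat_above (sum_n (fun x => Cmod (f x)) D)) as [B HB]. exists B. intro x.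
  assert (Hnn : forall x, 0 <= Cmod (f x)) by (intro; apply Cmod_ge_0).
  destruct (Nat.le_gt_cases x D) as [Hx|Hx].
  - pose proof (sum_n_R_term_le (fun x => Cmod (f x)) x D Hnn Hx). lra.
  - rewrite H, Cmod_0 by lia. apply pos_INR.
Qed.

Lemma sqnorm_iter_dilate_small w p D delta : doubling_summable w -> supp_in p 3 D -> 0 < delta ->
  exists G, forall n, (G <= n)%nat -> sqnorm w (Nat.iter n dilate p) <= delta.
Proof.
  intros Hsum Hp Hd. set (d' := delta / INR (S D)).
  assert (Hd' : 0 < d') by (apply Rdiv_lt_0_compat; [lra | apply lt_0_INR; lia]).
  destruct (eventually_forall_le (fun x n => wsum (fun y => w (2 ^ n * y)%nat) p x <= d') D) as [G HG].
  { intros x _. destruct (Nat.lt_ge_cases x 3) as [H3|H3].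
    - exists 0%nat. intros. unfold wsum. rewrite Hp, Cmod_0 by lia. unfold Rdiv. simpl. lra.
    - assert (Hl : is_lim_seq (fun n => Cmod (p x) ^ 2 * / w (x * 2 ^ n)%nat) 0).
      { rewrite <- (Rmult_0_r (Cmod (p x) ^ 2)).
        apply (is_lim_seq_scal_l _ _ (Finite 0)), ex_series_lim_0, Hsum, H3. }
      apply is_lim_seq_spec in Hl. destruct (Hl (mkposreal d' Hd')) as [M HM].
      exists M. intros n Hn. specialize (HM n Hn). simpl in HM. apply Rabs_def2 in HM.
      unfold wsum, Rdiv. rewrite Nat.mul_comm. lra. }
  exists G. intros n Hn. destruct (sqnorm_iter_dilate w n p D) as [_ ->]; [intros; apply Hp; lia|].
  eapply Rle_trans; [apply sum_n_R_le_const; intros x Hx; now apply HG|].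
  unfold d'. right. field. apply not_0_INR. lia.
Qed.

Lemma nilpoly_dilation_bound w p delta : doubling_summable w -> nilpoly p -> 0 < delta ->
  exists c, supp_in p 3 c /\ Nat.iter c Top p = czero /\ (forall x, Cmod (p x) <= INR c) /\
    forall n, (c <= n)%nat -> sqnorm w (Nat.iter n dilate p) <= delta.
Proof.
  intros Hsum [[D Hp] [K HK]] Hd.
  destruct (Cmod_bounded_of_supp p D Hp) as [B HB].
  destruct (sqnorm_iter_dilate_small w p D delta Hsum Hp Hd) as [G HG].
  exists (D + K + B + G)%nat. repeat split.
  - intros m Hm. apply Hp. lia.
  - apply (iter_Top_czero_le K); [exact HK | lia].
  - intro x. eapply Rle_trans; [apply HB | apply le_INR; lia].
  - intros n Hn. apply HG. lia.
Qed.

Lemma holo_disk_of_coeff_bound (c : coeffs) C :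
  (forall m, Cmod (c m) <= C * (INR (S m) * INR (S m))) -> holo_disk c.
Proof.
  intros H r Hr.
  assert (HC : 0 <= C) by (specialize (H 0%nat); pose proof (Cmod_ge_0 (c 0%nat)); simpl in H; lra).
  set (s := (1 + r) / 2).
  apply (Series_comparison _ (fun n => C * (INR (S n) * INR (S n) * s ^ n))).
  - intro n. split; [apply Rmult_le_pos; [apply Cmod_ge_0 | apply pow_le; lra]|].
    rewrite <- Rmult_assoc. apply Rmult_le_compat; auto using Cmod_ge_0.
    + apply pow_le. lra.
    + apply pow_incr. unfold s. lra.
  - apply (ex_series_scal_l (V := R_NormedModule)), ex_series_poly_geom. unfold s. lra.
Qed.

Lemma in_X_of_coeff_bound w f C : low3 f -> sqsummable w f ->
  (forall m, Cmod (f m) <= C * (INR (S m) * INR (S m))) -> in_X w f.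
Proof. intros Hl Hs Hb. repeat split; auto. eapply holo_disk_of_coeff_bound. exact Hb. Qed.

Lemma normX_lt_of_sqnorm w h eps : (forall n, 0 < w n) -> sqsummable w h -> 0 < eps ->
  sqnorm w h < eps ^ 2 -> normX w h < eps.
Proof.
  intros Hw HL He H. unfold normX. rewrite <- (sqrt_pow2 eps) by lra.
  apply sqrt_lt_1_alt. split; [now apply sqnorm_nonneg | exact H].
Qed.

(** * Lacunary sums of dilated blocks *)

Definition triangular (u : nat -> coeffs) : Prop := forall k m, (m < k)%nat -> u k m = RtoC 0.

(* Under [triangular u] this is the pointwise sum of the whole family [u]. *)
Definition tri_sum (u : nat -> coeffs) : coeffs := fun m => sum_n (fun k => u k m) m.

Lemma triangular_shift u : triangular u -> triangular (fun k => u (S k)).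
Proof. intros H k m Hm. apply H. lia. Qed.

Lemma disjoint_shift u : disjoint u -> disjoint (fun k => u (S k)).
Proof. intros H i j m Hij. apply H. lia. Qed.

Lemma tri_sum_as_sum_n u m M : triangular u -> (m <= M)%nat -> tri_sum u m = sum_n (fun k => u k m) M.
Proof.
  intros Ht H. unfold tri_sum. induction H as [|M HM IH]; [reflexivity|].
  rewrite sum_Sn_C, <- IH, Ht by lia. ring_C.
Qed.

Lemma tri_sum_cons u : triangular u -> tri_sum u = cadd (u 0%nat) (tri_sum (fun k => u (S k))).
Proof.
  intros Ht. apply functional_extensionality. intro m.
  rewrite (tri_sum_as_sum_n u m (S m)), sum_n_C_shift by (auto || lia). reflexivity.
Qed.

Lemma triangular_dilate u : triangular u -> triangular (fun k => dilate (u k)).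
Proof.
  intros Ht k x Hx. unfold dilate. destruct (Nat.even x) eqn:Ex; [|reflexivity].
  apply Ht. pose proof (even_div2 x Ex). lia.
Qed.

Lemma tri_sum_dilate u : triangular u -> dilate (tri_sum u) = tri_sum (fun k => dilate (u k)).
Proof.
  intros Ht. apply functional_extensionality. intro m. unfold dilate at 1.
  destruct (Nat.even m) eqn:E.
  - pose proof (even_div2 m E).
    rewrite (tri_sum_as_sum_n _ m m), (tri_sum_as_sum_n u (m / 2) m) by (auto using triangular_dilate; lia).
    apply sum_n_ext. intro k. unfold dilate. now rewrite E.
  - symmetry. apply sum_n_C_zero. intros j _. unfold dilate. now rewrite E.
Qed.

Lemma tri_sum_iter_dilate d u : triangular u ->
  Nat.iter d dilate (tri_sum u) = tri_sum (fun k => Nat.iter d dilate (u k)).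
Proof.
  intros Ht. induction d as [|d IH]; [reflexivity|].
  assert (Htd : triangular (fun k => Nat.iter d dilate (u k)))
    by (clear IH; induction d; [exact Ht | now apply (triangular_dilate (fun k => Nat.iter d dilate (u k)))]).
  simpl. rewrite IH. now apply tri_sum_dilate.
Qed.

Lemma tri_sum_low3 u : (forall k, low3 (u k)) -> low3 (tri_sum u).
Proof. intros H n Hn. apply sum_n_C_zero. intros. now apply H. Qed.

Lemma Cmod_tri_sum_le u C m : (forall k, Cmod (u k m) <= C) -> Cmod (tri_sum u m) <= INR (S m) * C.
Proof. intros H. eapply Rle_trans; [apply Cmod_sum_n_le | now apply sum_n_R_le_const]. Qed.

Lemma sqnorm_tri_sum_le w u (b : nat -> R) : (forall n, 0 < w n) -> triangular u -> disjoint u ->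
  (forall k, sqsummable w (u k) /\ sqnorm w (u k) <= b k) -> ex_series b ->
  sqsummable w (tri_sum u) /\ sqnorm w (tri_sum u) <= Series b.
Proof.
  intros Hw Ht Hd Hu Hb.
  destruct (Series_comparison (fun k => sqnorm w (u k)) b) as [He Hle]; [|exact Hb|].
  { intro k. split; [apply sqnorm_nonneg; [exact Hw|] |]; apply Hu. }
  apply nonneg_series_bounded; [intro; now apply wsum_nonneg|].
  intro M. rewrite (sum_n_ext_loc _ (wsum w (csum u M))).
  - destruct (sqnorm_csum_disjoint w u M Hd (fun i _ => proj1 (Hu i))) as [H1 H2].
    eapply Rle_trans; [apply sum_n_le_Series; [intro; now apply wsum_nonneg | exact H1]|].
    fold (sqnorm w (csum u M)). rewrite H2. eapply Rle_trans; [|exact Hle].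
    apply sum_n_le_Series; [intro; apply sqnorm_nonneg; [exact Hw | apply Hu] | exact He].
  - intros n Hn. unfold wsum, csum. now rewrite (tri_sum_as_sum_n u n M).
Qed.

Lemma gap_monotone (e D : nat -> nat) : (forall k, (e k + D k < e (S k))%nat) ->
  forall a b, (a < b)%nat -> (e a + D a < e b)%nat.
Proof.
  intros H a b Hab. induction Hab as [|b _ IH]; [apply H|].
  specialize (H b). lia.
Qed.

Lemma gap_ge_index (e D : nat -> nat) : (forall k, (e k + D k < e (S k))%nat) -> forall k, (k <= e k)%nat.
Proof. intros H k. induction k as [|k IH]; [lia|]. specialize (H k). lia. Qed.

(* The supports [[2^(e k) * 3, 2^(e k) * D k]] are pairwise disjoint because
   [2^(e a) * D a < 2^(e a + D a) <= 2^(e b)] for [a < b]. *)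
Lemma dilated_family_tri_disj (e D : nat -> nat) (t : nat -> coeffs) :
  (forall k, supp_in (t k) 3 (D k)) -> (forall k, (e k + D k < e (S k))%nat) ->
  triangular (fun k => Nat.iter (e k) dilate (t k)) /\ disjoint (fun k => Nat.iter (e k) dilate (t k)).
Proof.
  intros Hs Hgap.
  assert (Hsupp : forall k, supp_in (Nat.iter (e k) dilate (t k)) (2 ^ e k * 3) (2 ^ e k * D k))
    by (intro k; now apply iter_dilate_supp).
  split.
  - intros k m Hm. apply Hsupp. left.
    pose proof (gap_ge_index e D Hgap k). pose proof (Nat.pow_gt_lin_r 2 (e k) ltac:(lia)). lia.
  - assert (Hlt : forall a b m, (a < b)%nat ->
      Nat.iter (e a) dilate (t a) m = RtoC 0 \/ Nat.iter (e b) dilate (t b) m = RtoC 0).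
    { intros a b m Hab. destruct (Nat.le_gt_cases m (2 ^ e a * D a)) as [Hm|Hm]; [right | left; apply Hsupp; lia].
      apply Hsupp. left.
      assert (2 ^ e a * 2 ^ D a <= 2 ^ e b)%nat.
      { rewrite <- Nat.pow_add_r. apply Nat.pow_le_mono_r; [lia|]. pose proof (gap_monotone e D Hgap a b Hab). lia. }
      assert (2 ^ e a * D a < 2 ^ e a * 2 ^ D a)%nat.
      { apply Nat.mul_lt_mono_pos_l; [apply Nat.neq_0_lt_0, Nat.pow_nonzero; lia | apply Nat.pow_gt_lin_r; lia]. }
      lia. }
    intros i j m Hij. destruct (Nat.lt_gt_cases i j) as [[A|A] _]; auto.
    destruct (Hlt j i m A); auto.
Qed.

Lemma Cmod_iter_dilate_le e f B : (forall x, Cmod (f x) <= B) -> 0 <= B -> forall m, Cmod (Nat.iter e dilate f m) <= B.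
Proof.
  intros H HB. induction e as [|e IH]; simpl; auto.
  intro m. unfold dilate. destruct (Nat.even m); auto. now rewrite Cmod_0.
Qed.

Lemma Cmod_dilated_family_le (e D : nat -> nat) (t : nat -> coeffs) C :
  (forall k, supp_in (t k) 3 (D k)) -> (forall k x, Cmod (t k x) <= C * INR (2 ^ e k)) ->
  forall m, Cmod (tri_sum (fun k => Nat.iter (e k) dilate (t k)) m) <= C * (INR (S m) * INR (S m)).
Proof.
  intros Hs Hb m.
  assert (HC : 0 <= C).
  { specialize (Hb 0%nat 0%nat). pose proof (Cmod_ge_0 (t 0%nat 0%nat)).
    pose proof (lt_0_INR (2 ^ e 0%nat) ltac:(apply Nat.neq_0_lt_0, Nat.pow_nonzero; lia)). nra. }
  eapply Rle_trans; [apply (Cmod_tri_sum_le _ (C * INR (S m)))|].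
  - intro k. destruct (Nat.lt_ge_cases m (2 ^ e k * 3)) as [Hm|Hm].
    + rewrite (iter_dilate_supp (e k) (t k) 3 (D k) (Hs k)), Cmod_0 by lia.
      apply Rmult_le_pos; [exact HC | apply pos_INR].
    + eapply Rle_trans; [apply Cmod_iter_dilate_le; [apply Hb | apply Rmult_le_pos; auto using pos_INR]|].
      apply Rmult_le_compat_l; [exact HC|]. apply le_INR. lia.
  - rewrite <- Rmult_assoc, (Rmult_comm (INR (S m)) C), Rmult_assoc. apply Rle_refl.
Qed.

Section LacunarySum.

Variables (t : nat -> coeffs) (D n : nat -> nat).
Hypothesis t_supp : forall k, supp_in (t k) 3 (D k).
Hypothesis n_gap : forall k, (n k + D k < n (S k))%nat.

Let n_mono a b : (a <= b)%nat -> (n a <= n b)%nat.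
Proof. intros H. destruct (Nat.eq_dec a b) as [->|]; [lia|]. pose proof (gap_monotone n D n_gap a b). lia. Qed.

Definition tail_family (j : nat) : nat -> coeffs := fun k => Nat.iter (n (j + k) - n j) dilate (t (j + k)).
Definition lacunary_tail (j : nat) : coeffs := tri_sum (tail_family j).

Lemma tail_family_tri_disj j : triangular (tail_family j) /\ disjoint (tail_family j).
Proof.
  apply (dilated_family_tri_disj _ (fun k => D (j + k))); [intro; apply t_supp|].
  intro k. pose proof (n_gap (j + k)). pose proof (n_mono j (j + k)). rewrite Nat.add_succ_r. lia.
Qed.

Lemma lacunary_tail_cons j : lacunary_tail j = cadd (t j) (Nat.iter (n (S j) - n j) dilate (lacunary_tail (S j))).
Proof.
  unfold lacunary_tail. rewrite tri_sum_cons, tri_sum_iter_dilate by apply tail_family_tri_disj.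
  unfold tail_family. rewrite Nat.add_0_r, Nat.sub_diag. do 2 f_equal.
  apply functional_extensionality. intro k. rewrite <- Nat.iter_add, <- Nat.add_succ_comm. f_equal.
  pose proof (n_mono j (S j)). pose proof (n_mono (S j) (S j + k)). lia.
Qed.

Lemma lacunary_tail_0 : tri_sum (fun k => Nat.iter (n k) dilate (t k)) = Nat.iter (n 0) dilate (lacunary_tail 0).
Proof.
  unfold lacunary_tail. rewrite tri_sum_iter_dilate by apply tail_family_tri_disj.
  f_equal. apply functional_extensionality. intro k. unfold tail_family.
  rewrite <- Nat.iter_add, Nat.add_0_l. f_equal. pose proof (n_mono 0 k). lia.
Qed.

Lemma lacunary_tail_low3 j : low3 (lacunary_tail j).
Proof.
  apply tri_sum_low3. intro k. apply iter_dilate_low3. eapply supp_in_low3. apply t_supp.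
Qed.

Lemma lacunary_tail_sub j : csub (lacunary_tail j) (t j) = tri_sum (fun k => tail_family j (S k)).
Proof.
  unfold lacunary_tail at 1. rewrite tri_sum_cons by apply tail_family_tri_disj.
  unfold tail_family at 1. rewrite Nat.add_0_r, Nat.sub_diag.
  apply functional_extensionality. intro m. unfold csub, cadd. simpl. ring_C.
Qed.

Hypothesis t_kill : forall k, Nat.iter (n (S k) - n k) Top (t k) = czero.

(* Earlier blocks are killed by [t_kill], later ones are only undilated. *)
Lemma iter_Top_lacunary_sum j :
  Nat.iter (n j) Top (tri_sum (fun k => Nat.iter (n k) dilate (t k))) = lacunary_tail j.
Proof.
  induction j as [|j IH].
  - rewrite lacunary_tail_0. apply iter_Top_dilate, lacunary_tail_low3.
  - replace (Nat.iter (n (S j)) Top) with (Nat.iter ((n (S j) - n j) + n j) Top)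
      by (f_equal; pose proof (n_mono j (S j)); lia).
    rewrite Nat.iter_add, IH, (lacunary_tail_cons j) at 1.
    rewrite iter_Top_cadd, t_kill, iter_Top_dilate by apply lacunary_tail_low3.
    apply cadd_czero_l.
Qed.

End LacunarySum.

(** * A vector whose orbit approximates a given sequence *)

Fixpoint lacunary_exponents (c : nat -> nat) (j : nat) : nat :=
  match j with
  | O => c 0%nat
  | S j' => (lacunary_exponents c j' + c j' + c j + 1)%nat
  end.

Lemma lacunary_exponents_gap c j : (lacunary_exponents c j + c j < lacunary_exponents c (S j))%nat.
Proof. simpl. lia. Qed.

Lemma lacunary_exponents_ge c j : (c j <= lacunary_exponents c j)%nat.
Proof. destruct j; simpl; lia. Qed.

Lemma lacunary_exponents_tail c j k :
  (lacunary_exponents c j + c (j + S k) <= lacunary_exponents c (j + S k))%nat.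
Proof.
  induction k as [|k IH]; rewrite Nat.add_succ_r; cbn [lacunary_exponents]; [rewrite Nat.add_0_r|]; lia.
Qed.

Lemma orbit_approximates_sequence w (t : nat -> coeffs) : (forall n, 0 < w n) -> doubling_summable w ->
  (forall j, nilpoly (t j)) ->
  exists f, in_X w f /\ forall j, exists N,
    sqsummable w (csub (Nat.iter N Top f) (t j)) /\ sqnorm w (csub (Nat.iter N Top f) (t j)) <= (/ 2) ^ j.
Proof.
  intros Hw Hsum Ht.
  (* A single number [c j] bounds the support of [t j], a killing exponent, its coefficients, and the
     dilation exponent beyond which [||S^e t_j||^2 <= 2^-j]. *)
  set (c := fun j => proj1_sig (constructive_indefinite_description _
              (nilpoly_dilation_bound w (t j) ((/ 2) ^ j) Hsum (Ht j) (pow_lt (/ 2) j ltac:(lra))))).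
  assert (Hc : forall j, supp_in (t j) 3 (c j) /\ Nat.iter (c j) Top (t j) = czero /\
            (forall x, Cmod (t j x) <= INR (c j)) /\
            forall e, (c j <= e)%nat -> sqnorm w (Nat.iter e dilate (t j)) <= (/ 2) ^ j)
    by (intro j; unfold c; now destruct constructive_indefinite_description).
  set (n := lacunary_exponents c).
  assert (Hsupp : forall k, supp_in (t k) 3 (c k)) by apply Hc.
  assert (Hgap : forall k, (n k + c k < n (S k))%nat) by apply lacunary_exponents_gap.
  assert (Hkill : forall k, Nat.iter (n (S k) - n k) Top (t k) = czero).
  { intro k. apply (iter_Top_czero_le (c k)); [apply Hc | specialize (Hgap k); lia]. }
  assert (Hblock : forall k e, (c k <= e)%nat ->
            sqsummable w (Nat.iter e dilate (t k)) /\ sqnorm w (Nat.iter e dilate (t k)) <= (/ 2) ^ k).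
  { intros k e He. split; [|now apply Hc].
    apply (sqnorm_iter_dilate w e (t k) (c k)). intros m Hm. apply Hsupp. lia. }
  exists (tri_sum (fun k => Nat.iter (n k) dilate (t k))). split.
  - destruct (dilated_family_tri_disj n c t Hsupp Hgap) as [Htri Hdisj].
    apply (in_X_of_coeff_bound _ _ 1).
    + apply tri_sum_low3. intro k. apply iter_dilate_low3. eapply supp_in_low3, Hsupp.
    + apply (sqnorm_tri_sum_le w _ (fun k => (/ 2) ^ k) Hw Htri Hdisj).
      * intro k. apply Hblock, lacunary_exponents_ge.
      * apply ex_series_geom. rewrite Rabs_pos_eq; lra.
    + apply (Cmod_dilated_family_le n c t 1 Hsupp). intros k x. rewrite Rmult_1_l.
      eapply Rle_trans; [apply Hc | apply le_INR].
      pose proof (lacunary_exponents_ge c k). pose proof (Nat.pow_gt_lin_r 2 (n k)). unfold n in *. lia.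
  - intro j. exists (n j).
    rewrite (iter_Top_lacunary_sum t c n Hsupp Hgap Hkill j), (lacunary_tail_sub t c n Hsupp Hgap j).
    destruct (tail_family_tri_disj t c n Hsupp Hgap j) as [Htri Hdisj].
    destruct (geometric_tail j) as [Hg1 Hg2]. rewrite <- Hg2.
    apply (sqnorm_tri_sum_le w _ _ Hw (triangular_shift _ Htri) (disjoint_shift _ Hdisj)); [|exact Hg1].
    intro k. apply Hblock. pose proof (lacunary_exponents_tail c j k). unfold n. lia.
Qed.

(** * Periodic points *)

Lemma Series_sqnorm_sparse_dilations w p D T delta (phi : nat -> nat) :
  (forall n, 0 < w n) -> doubling_summable w -> supp_in p 3 D ->
  (forall x, (3 <= x <= D)%nat -> Series (tail_from T (fun n => / w (x * 2 ^ n)%nat)) <= delta) ->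
  (forall k, (phi k < phi (S k))%nat) -> (T < phi 0)%nat ->
  ex_series (fun k => sqnorm w (Nat.iter (phi k) dilate p)) /\
  Series (fun k => sqnorm w (Nat.iter (phi k) dilate p)) <= delta * sum_n (fun x => Cmod (p x) ^ 2) D.
Proof.
  intros Hw Hsum Hp Htail Hphi HT.
  set (G := fun x k => Cmod (p x) ^ 2 * / w (x * 2 ^ phi k)%nat).
  assert (HG : forall x, (x <= D)%nat -> ex_series (G x) /\ Series (G x) <= Cmod (p x) ^ 2 * delta).
  { intros x Hx. destruct (Nat.lt_ge_cases x 3) as [H3|H3].
    - assert (E : forall k, G x k = 0) by (intro k; unfold G; rewrite Hp, Cmod_0 by lia; simpl; ring).
      destruct (Series_finite_support (G x) 0) as [S1 S2]; [intros; apply E|].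
      rewrite S2, sum_O_R, E, Hp, Cmod_0 by lia. split; [exact S1 | simpl; lra].
    - destruct (Series_subsequence_le (fun n => / w (x * 2 ^ n)%nat) phi T) as [S1 S2];
        [intro; left; apply Rinv_0_lt_compat, Hw | now apply Hsum | exact Hphi | exact HT |].
      split; unfold G.
      + now apply (ex_series_scal_l (V := R_NormedModule)).
      + rewrite Series_scal_l. apply Rmult_le_compat_l; [apply pow2_ge_0|].
        eapply Rle_trans; [exact S2 | apply Htail; lia]. }
  destruct (Series_sum_n G D) as [GS1 GS2]; [intros; now apply HG|].
  assert (E : forall k, sqnorm w (Nat.iter (phi k) dilate p) = sum_n (fun x => G x k) D).
  { intro k. rewrite (proj2 (sqnorm_iter_dilate w _ p D ltac:(intros; apply Hp; lia))).
    apply sum_n_ext. intro x. unfold wsum, G, Rdiv. now rewrite Nat.mul_comm. }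
  rewrite (Series_ext _ _ E), GS2. split; [exact (ex_series_ext _ _ (fun k => eq_sym (E k)) GS1)|].
  rewrite <- sum_n_R_mult_l. apply sum_n_R_le. intros x Hx. destruct (HG x Hx). lra.
Qed.

Section PeriodicSum.

Variables (p : coeffs) (D N : nat).
Hypothesis p_supp : supp_in p 3 D.
Hypothesis D_lt_N : (D < N)%nat.

Definition periodic_sum : coeffs := tri_sum (fun k => Nat.iter (k * N) dilate p).

Let p_supp_all : forall k : nat, supp_in p 3 D.
Proof. now intro. Qed.

Let N_gap : forall k, (k * N + D < S k * N)%nat.
Proof. intro k. nia. Qed.

Lemma periodic_sum_fixed : Nat.iter N Top p = czero -> Nat.iter N Top periodic_sum = periodic_sum.
Proof.
  intros HK.
  assert (Hkill : forall k, Nat.iter (S k * N - k * N) Top p = czero) by (intro k; now replace (S k * N - k * N)%nat with N by nia).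
  pose proof (iter_Top_lacunary_sum (fun _ => p) _ (fun k => k * N)%nat p_supp_all N_gap Hkill 1) as E.
  cbv beta in E. rewrite Nat.mul_1_l in E. unfold periodic_sum at 1. rewrite E.
  unfold lacunary_tail, tail_family, periodic_sum. do 2 f_equal. apply functional_extensionality. intro k.
  f_equal. lia.
Qed.

Lemma sqnorm_periodic_sum_sub w : (forall n, 0 < w n) ->
  ex_series (fun k => sqnorm w (Nat.iter (S k * N) dilate p)) ->
  sqsummable w (csub periodic_sum p) /\
  sqnorm w (csub periodic_sum p) <= Series (fun k => sqnorm w (Nat.iter (S k * N) dilate p)).
Proof.
  intros Hw He.
  replace periodic_sum with (lacunary_tail (fun _ => p) (fun k => k * N)%nat 0)
    by (unfold periodic_sum; now rewrite (lacunary_tail_0 _ _ _ p_supp_all N_gap)).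
  rewrite (lacunary_tail_sub _ _ _ p_supp_all N_gap 0).
  destruct (tail_family_tri_disj _ _ _ p_supp_all N_gap 0) as [Htri Hdisj].
  apply (sqnorm_tri_sum_le w _ _ Hw (triangular_shift _ Htri) (disjoint_shift _ Hdisj)); [|exact He].
  intro k. unfold tail_family. rewrite Nat.add_0_l, Nat.mul_0_l, Nat.sub_0_r.
  split; [|apply Rle_refl]. apply (sqnorm_iter_dilate w _ p D). intros; apply p_supp; lia.
Qed.

Lemma periodic_sum_in_X w : (forall n, 0 < w n) ->
  ex_series (fun k => sqnorm w (Nat.iter (S k * N) dilate p)) -> in_X w periodic_sum.
Proof.
  intros Hw He. destruct (Cmod_bounded_of_supp p D p_supp) as [B HB].
  apply (in_X_of_coeff_bound _ _ (INR B)).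
  - apply tri_sum_low3. intro k. apply iter_dilate_low3. eapply supp_in_low3, p_supp.
  - replace periodic_sum with (cadd p (csub periodic_sum p))
      by (apply functional_extensionality; intro m; unfold cadd, csub; ring_C).
    apply sqnorm_cadd_le; [exact Hw | apply (sqnorm_finite_support w p D); intros; apply p_supp; lia |].
    now apply sqnorm_periodic_sum_sub.
  - apply (Cmod_dilated_family_le _ (fun _ => D) (fun _ => p) (INR B) p_supp_all). intros k x.
    pose proof (le_INR 1 (2 ^ (k * N)) ltac:(apply Nat.le_succ_l, Nat.neq_0_lt_0, Nat.pow_nonzero; lia)).
    pose proof (pos_INR B). specialize (HB x). simpl in *. nra.
Qed.

End PeriodicSum.

Lemma periodic_point_near w p eps : (forall n, 0 < w n) -> doubling_summable w -> nilpoly p -> 0 < eps ->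
  exists f, in_X w f /\ (exists N, (1 <= N)%nat /\ Nat.iter N Top f = f) /\
    sqsummable w (csub f p) /\ sqnorm w (csub f p) < eps.
Proof.
  intros Hw Hsum [[D Hp] [K HK]] Heps.
  set (P2 := sum_n (fun x => Cmod (p x) ^ 2) D).
  assert (HP2 : 0 <= P2) by (apply sum_n_R_nonneg; intro; apply pow2_ge_0).
  set (delta := eps / (P2 + 1)).
  assert (Hdelta : 0 < delta) by (apply Rdiv_lt_0_compat; lra).
  destruct (eventually_forall_le
    (fun x T => (3 <= x)%nat -> Series (tail_from T (fun n => / w (x * 2 ^ n)%nat)) < delta) D) as [T HT].
  { intros x _. destruct (Nat.lt_ge_cases x 3) as [H3|H3]; [exists 0%nat; intros; lia|].
    destruct (Series_tail_small (fun n => / w (x * 2 ^ n)%nat) delta) as [T HT];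
      [intro; left; apply Rinv_0_lt_compat, Hw | now apply Hsum | exact Hdelta |].
    exists T. intros T' HT' _. now apply HT. }
  (* [N > D] separates the blocks, [N >= K] kills [p], and [N > T] keeps all dilations in the small tail. *)
  set (N := S (T + K + D)).
  destruct (Series_sqnorm_sparse_dilations w p D T delta (fun k => (S k * N)%nat) Hw Hsum Hp)
    as [S1 S2]; [intros x Hx; left; apply HT; lia | intro k; unfold N; lia | unfold N; lia |].
  assert (HDN : (D < N)%nat) by (unfold N; lia).
  exists (periodic_sum p N). split; [|split; [|split]].
  - now apply (periodic_sum_in_X p D N).
  - exists N. split; [unfold N; lia|]. apply (periodic_sum_fixed p D); [exact Hp | exact HDN |].
    apply (iter_Top_czero_le K); [exact HK | unfold N; lia].
  - now apply (sqnorm_periodic_sum_sub p D N).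
  - eapply Rle_lt_trans; [apply (sqnorm_periodic_sum_sub p D N); auto|].
    eapply Rle_lt_trans; [exact S2|]. fold P2. unfold delta.
    replace (eps / (P2 + 1) * P2) with (eps - eps / (P2 + 1)) by (field; lra).
    assert (0 < eps / (P2 + 1)) by (apply Rdiv_lt_0_compat; lra). lra.
Qed.

(** * A countable dense family of polynomials killed by a power of [T] *)

(* [seq_entry x s] is the [x]-th entry of the sequence coded by [s], read through iterated Cantor pairing. *)
Fixpoint seq_entry (x s : nat) : nat :=
  match x with
  | O => fst (Cantor.of_nat s)
  | S x' => seq_entry x' (snd (Cantor.of_nat s))
  end.

Lemma seq_entry_surj (h : nat -> nat) M : exists s, forall x, (x <= M)%nat -> seq_entry x s = h x.
Proof.
  revert h. induction M as [|M IH]; intros h.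
  - exists (Cantor.to_nat (h 0%nat, 0%nat)). intros x Hx. replace x with 0%nat by lia.
    cbn [seq_entry]. now rewrite Cantor.cancel_of_to.
  - destruct (IH (fun x => h (S x))) as [s Hs].
    exists (Cantor.to_nat (h 0%nat, s)). intros [|x] Hx; cbn [seq_entry]; rewrite Cantor.cancel_of_to; [reflexivity|].
    apply Hs. lia.
Qed.

Definition int_code (n : nat) : R := INR (fst (Cantor.of_nat n)) - INR (snd (Cantor.of_nat n)).

Lemma int_code_surj (z : Z) : exists n, int_code n = IZR z.
Proof.
  exists (Cantor.to_nat (Z.to_nat z, Z.to_nat (- z))). unfold int_code. rewrite Cantor.cancel_of_to.
  cbn [fst snd]. rewrite !INR_IZR_INZ, <- minus_IZR. f_equal. lia.
Qed.

Definition gauss_rat (n : nat) : C :=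
  let d := snd (Cantor.of_nat (snd (Cantor.of_nat n))) in
  (int_code (fst (Cantor.of_nat n)) / INR (S d), int_code (fst (Cantor.of_nat (snd (Cantor.of_nat n)))) / INR (S d)).

Lemma round_to_grid (r D : R) : 0 < D -> exists z : Z, Rabs (r - IZR z / D) <= / D.
Proof.
  intros HD. destruct (archimed (r * D)) as [H1 H2]. exists (up (r * D)).
  replace (r - IZR (up (r * D)) / D) with (- ((IZR (up (r * D)) - r * D) / D)) by (field; lra).
  rewrite Rabs_Ropp, Rabs_pos_eq.
  - unfold Rdiv. rewrite <- (Rmult_1_l (/ D)) at 2. apply Rmult_le_compat_r; [left; now apply Rinv_0_lt_compat | lra].
  - apply Rdiv_le_0_compat; lra.
Qed.

Lemma Cmod_le_Rabs_sum (z : C) : Cmod z <= Rabs (fst z) + Rabs (snd z).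
Proof.
  destruct z as [x y]. unfold Cmod. simpl.
  pose proof (Rabs_pos x). pose proof (Rabs_pos y).
  rewrite <- (sqrt_Rsqr (Rabs x + Rabs y)) by lra. apply sqrt_le_1_alt. unfold Rsqr.
  pose proof (Rsqr_abs x). pose proof (Rsqr_abs y). unfold Rsqr in *. nra.
Qed.

Lemma gauss_rat_dense (c : C) delta : 0 < delta -> exists n, Cmod (Cminus c (gauss_rat n)) < delta.
Proof.
  intros Hd. destruct (nat_above (2 / delta)) as [d Hd2].
  set (D := INR (S d)). assert (HD : 0 < D) by (apply lt_0_INR; lia).
  assert (HD2 : 2 / D < delta).
  { apply Rlt_div_l; [exact HD|]. apply Rlt_div_l in Hd2; [|exact Hd]. unfold D. rewrite S_INR. nra. }
  destruct (round_to_grid (fst c) D HD) as [za Ha]. destruct (round_to_grid (snd c) D HD) as [zb Hb].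
  destruct (int_code_surj za) as [na Hna]. destruct (int_code_surj zb) as [nb Hnb].
  exists (Cantor.to_nat (na, Cantor.to_nat (nb, d))).
  unfold gauss_rat. rewrite !Cantor.cancel_of_to. cbn [fst snd]. rewrite Cantor.cancel_of_to. cbn [fst snd].
  fold D. rewrite Hna, Hnb.
  eapply Rle_lt_trans; [apply Cmod_le_Rabs_sum|]. destruct c as [x y]. simpl in *.
  unfold Rminus, Rdiv in *. lra.
Qed.

Definition target (j : nat) : coeffs :=
  let r := snd (Cantor.of_nat j) in
  let M := fst (Cantor.of_nat r) in
  let L := fst (Cantor.of_nat (snd (Cantor.of_nat r))) in
  let s := snd (Cantor.of_nat (snd (Cantor.of_nat r))) in
  nil_part M (S L) (fun x => gauss_rat (seq_entry x s)).

Lemma target_nilpoly j : nilpoly (target j).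
Proof. apply nil_part_nilpoly. lia. Qed.

(* The unused first coordinate of [j] makes every target recur with arbitrarily large index. *)
Lemma target_recurs M L s J : exists j, (J <= j)%nat /\ target j = nil_part M (S L) (fun x => gauss_rat (seq_entry x s)).
Proof.
  exists (Cantor.to_nat (J, Cantor.to_nat (M, Cantor.to_nat (L, s)))). split.
  - pose proof (Cantor.to_nat_non_decreasing J (Cantor.to_nat (M, Cantor.to_nat (L, s)))). lia.
  - unfold target. now repeat (rewrite Cantor.cancel_of_to; cbn [fst snd]).
Qed.

Section LowerBoundedWeight.

Variables (w : nat -> R) (m0 : R).
Hypothesis m0_pos : 0 < m0.
Hypothesis w_ge : forall n, m0 <= w n.

Let w_pos n : 0 < w n.
Proof. specialize (w_ge n). lra. Qed.

Lemma sqnorm_monom_le x : sqsummable w (monom x) /\ sqnorm w (monom x) <= / m0.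
Proof.
  destruct (sqnorm_monom w x) as [H1 H2]. split; [exact H1|]. rewrite H2. now apply Rinv_le_contravar.
Qed.

(* The [L] monomials of the chain are distinct, hence orthogonal. *)
Lemma sqnorm_chain_avg L x : (1 <= L)%nat -> sqsummable w (chain_avg L x) /\ sqnorm w (chain_avg L x) <= / (INR L * m0).
Proof.
  intros HL. assert (HLpos : 0 < INR L) by (apply lt_0_INR; lia). unfold chain_avg.
  assert (Hd : disjoint (fun i => cscal (RtoC (/ INR L)) (monom (partner_chain (S i) x)))).
  { intros i j m Hij. unfold cscal. destruct (Nat.eq_dec m (partner_chain (S i) x)) as [->|Hm].
    - right. rewrite monom_other by (apply partner_chain_injective; lia). ring_C.
    - left. rewrite monom_other by exact Hm. ring_C. }
  destruct (sqnorm_csum_disjoint w _ (L - 1) Hd) as [H1 H2].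
  { intros i _. apply sqnorm_cscal, sqnorm_monom. }
  split; [exact H1|]. rewrite H2.
  eapply Rle_trans; [apply (sum_n_R_le_const _ (/ INR L ^ 2 * / m0))|].
  - intros i _. rewrite (proj2 (sqnorm_cscal w _ _ (proj1 (sqnorm_monom w _)))), Cmod_R, Rabs_pos_eq
      by (left; now apply Rinv_0_lt_compat).
    rewrite <- pow_inv. apply Rmult_le_compat_l; [left; apply pow_lt, Rinv_0_lt_compat; lra|].
    apply sqnorm_monom_le.
  - replace (S (L - 1)) with L by lia. right. field. split; lra.
Qed.

Lemma sqnorm_nil_monom_le L x : (1 <= L)%nat -> sqsummable w (nil_monom L x) /\ sqnorm w (nil_monom L x) <= 4 / m0.
Proof.
  intros HL. destruct (sqnorm_chain_avg L x HL) as [A1 A2]. destruct (sqnorm_monom_le x) as [M1 M2].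
  destruct (sqnorm_cadd_le w w_pos _ _ M1 (proj1 (sqnorm_cscal w (Copp (RtoC 1)) _ A1))) as [S1 S2].
  unfold nil_monom. rewrite csub_as_cadd. split; [exact S1|].
  rewrite (proj2 (sqnorm_cscal w _ _ A1)), Cmod_opp, Cmod_1 in S2.
  assert (/ (INR L * m0) <= / m0).
  { apply Rinv_le_contravar; [lra|]. pose proof (le_INR 1 L HL). simpl in *. nra. }
  unfold Rdiv. lra.
Qed.

Lemma sqnorm_sub_poly_part_small g eps : low3 g -> sqsummable w g -> 0 < eps ->
  exists M, sqsummable w (csub g (poly_part M g)) /\ sqnorm w (csub g (poly_part M g)) < eps.
Proof.
  intros Hg HL Heps.
  destruct (Series_tail_small (wsum w g) eps (wsum_nonneg w w_pos g) HL Heps) as [M HM].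
  exists M. assert (E : forall n, wsum w (csub g (poly_part M g)) n = tail_from (M + 3) (wsum w g) n).
  { intro n. unfold wsum, csub, tail_from. rewrite poly_part_spec.
    destruct (Nat.leb_spec 3 n), (Nat.leb_spec n (M + 3)); cbn [andb].
    - replace (Cminus (g n) (g n)) with (RtoC 0) by ring_C. rewrite Cmod_0. unfold Rdiv. ring.
    - replace (Cminus (g n) (RtoC 0)) with (g n) by ring_C. reflexivity.
    - rewrite Hg by lia. replace (Cminus (RtoC 0) (RtoC 0)) with (RtoC 0) by ring_C. rewrite Cmod_0. unfold Rdiv. ring.
    - lia. }
  unfold sqsummable, sqnorm. rewrite (Series_ext _ _ E). split; [|apply HM; lia].
  apply (ex_series_ext _ _ (fun n => eq_sym (E n))).
  apply (Series_comparison _ (wsum w g)); [|exact HL].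
  intro n. split; [now apply tail_from_nonneg, wsum_nonneg|]. unfold tail_from.
  destruct (n <=? M + 3)%nat; [apply wsum_nonneg, w_pos | lra].
Qed.

Lemma sqnorm_csum_cscal_le (a : nat -> C) (u : nat -> coeffs) M B :
  (forall i, sqsummable w (u i) /\ sqnorm w (u i) <= B) ->
  sqsummable w (csum (fun i => cscal (a i) (u i)) M) /\
  sqnorm w (csum (fun i => cscal (a i) (u i)) M) <= INR (S M) * sum_n (fun i => Cmod (a i) ^ 2) M * B.
Proof.
  intros Hu. destruct (sqnorm_csum w w_pos (fun i => cscal (a i) (u i)) M) as [H1 H2].
  { intros i _. apply sqnorm_cscal, Hu. }
  split; [exact H1|]. eapply Rle_trans; [exact H2|].
  rewrite Rmult_assoc, <- sum_n_R_mult_r. apply Rmult_le_compat_l; [apply pos_INR|].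
  apply sum_n_R_le. intros i _. rewrite (proj2 (sqnorm_cscal w _ _ (proj1 (Hu i)))).
  apply Rmult_le_compat_l; [apply pow2_ge_0 | apply Hu].
Qed.

Lemma nil_part_approx g eps : low3 g -> sqsummable w g -> 0 < eps ->
  exists M L, (1 <= L)%nat /\ sqsummable w (csub g (nil_part M L g)) /\ sqnorm w (csub g (nil_part M L g)) < eps.
Proof.
  intros Hg HL Heps.
  destruct (sqnorm_sub_poly_part_small g (eps / 4) Hg HL ltac:(lra)) as [M [T1 T2]].
  set (G := sum_n (fun i => Cmod (g (3 + i)%nat) ^ 2) M).
  assert (HG : 0 <= G) by (apply sum_n_R_nonneg; intro; apply pow2_ge_0).
  destruct (nat_above (INR (S M) * G * 4 / (eps * m0))) as [L0 HL0].
  set (L := S L0). assert (HLpos : 0 < INR L) by (apply lt_0_INR; unfold L; lia).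
  destruct (sqnorm_csum_cscal_le (fun i => g (3 + i)%nat) (fun i => chain_avg L (3 + i)) M (/ (INR L * m0)))
    as [Q1 Q2]; [intro i; apply sqnorm_chain_avg; unfold L; lia|].
  rewrite <- poly_part_sub_nil_part in Q1, Q2. fold G in Q2.
  exists M, L. split; [unfold L; lia|].
  destruct (sqnorm_csub_triangle w w_pos _ _ _ T1 Q1) as [R1 R2]. split; [exact R1|].
  assert (Hk : INR (S M) * G * 4 < INR L * (eps * m0)).
  { apply Rlt_div_l; [nra|]. unfold L. rewrite (S_INR L0). lra. }
  assert (INR (S M) * G * / (INR L * m0) < eps / 4).
  { apply Rlt_div_l; [nra | lra]. }
  lra.
Qed.

Lemma nilpoly_dense g eps : low3 g -> sqsummable w g -> 0 < eps ->
  exists p, nilpoly p /\ sqsummable w (csub g p) /\ sqnorm w (csub g p) < eps.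
Proof.
  intros Hg HL Heps. destruct (nil_part_approx g eps Hg HL Heps) as [M [L [HL1 H]]].
  exists (nil_part M L g). split; [now apply nil_part_nilpoly | exact H].
Qed.

Lemma sqnorm_nil_part_sub_le M L h h' : (1 <= L)%nat ->
  sqsummable w (csub (nil_part M L h) (nil_part M L h')) /\
  sqnorm w (csub (nil_part M L h) (nil_part M L h')) <=
    INR (S M) * sum_n (fun i => Cmod (Cminus (h (3 + i)%nat) (h' (3 + i)%nat)) ^ 2) M * (4 / m0).
Proof.
  intros HL. rewrite nil_part_sub. apply sqnorm_csum_cscal_le. intro i. now apply sqnorm_nil_monom_le.
Qed.

Lemma target_dense g eps J : low3 g -> sqsummable w g -> 0 < eps ->
  exists j, (J <= j)%nat /\ sqsummable w (csub g (target j)) /\ sqnorm w (csub g (target j)) < eps.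
Proof.
  intros Hg HL Heps. destruct (nil_part_approx g (eps / 4) Hg HL ltac:(lra)) as [M [L [HL1 [A1 A2]]]].
  set (A := eps / 16 / (INR (S M) * INR (S M) * (4 / m0))).
  assert (HA : 0 < A).
  { apply Rdiv_lt_0_compat; [lra|]. pose proof (lt_0_INR (S M) ltac:(lia)).
    apply Rmult_lt_0_compat; [nra | apply Rdiv_lt_0_compat; lra]. }
  set (delta := sqrt A). assert (Hdelta : 0 < delta) by now apply sqrt_lt_R0.
  assert (Hcode : forall x, exists n, Cmod (Cminus (g x) (gauss_rat n)) < delta) by (intro; now apply gauss_rat_dense).
  destruct (seq_entry_surj (fun x => proj1_sig (constructive_indefinite_description _ (Hcode x))) (M + 3)) as [s Hs].
  destruct (target_recurs M (L - 1) s J) as [j [Hj Ej]]. replace (S (L - 1)) with L in Ej by lia.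
  exists j. split; [exact Hj|]. rewrite Ej.
  destruct (sqnorm_nil_part_sub_le M L g (fun x => gauss_rat (seq_entry x s)) HL1) as [B1 B2].
  assert (Hsum : sum_n (fun i => Cmod (Cminus (g (3 + i)%nat) (gauss_rat (seq_entry (3 + i) s))) ^ 2) M <= INR (S M) * A).
  { apply sum_n_R_le_const. intros i Hi. rewrite Hs by lia.
    destruct constructive_indefinite_description as [n Hn]. cbn [proj1_sig].
    replace A with (delta ^ 2) by (apply pow2_sqrt; lra).
    apply pow_incr. split; [apply Cmod_ge_0 | lra]. }
  assert (Hbound : INR (S M) * (INR (S M) * A) * (4 / m0) = eps / 16).
  { unfold A. pose proof (lt_0_INR (S M) ltac:(lia)). field. lra. }
  assert (Hm4 : 0 < 4 / m0) by (apply Rdiv_lt_0_compat; lra).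
  pose proof (pos_INR (S M)).
  destruct (sqnorm_csub_triangle w w_pos _ _ _ A1 B1) as [C1 C2]. split; [exact C1|].
  assert (INR (S M) * sum_n (fun i => Cmod (Cminus (g (3 + i)%nat) (gauss_rat (seq_entry (3 + i) s))) ^ 2) M * (4 / m0)
            <= eps / 16).
  { rewrite <- Hbound. apply Rmult_le_compat_r; [lra|]. now apply Rmult_le_compat_l. }
  lra.
Qed.

End LowerBoundedWeight.

Lemma chaotic_of_lower_bound w m0 : 0 < m0 -> (forall n, m0 <= w n) -> doubling_summable w -> chaotic w.
Proof.
  intros Hm0 Hw Hsum. assert (Hpos : forall n, 0 < w n) by (intro n; specialize (Hw n); lra). split.
  - destruct (orbit_approximates_sequence w target Hpos Hsum target_nilpoly) as [f [Hf Horbit]].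
    exists f. split; [exact Hf|]. intros g [Hg [_ HgL]] eps Heps.
    assert (He2 : 0 < eps ^ 2 / 4) by (apply Rdiv_lt_0_compat; [apply pow_lt|]; lra).
    destruct (half_pow_small _ He2) as [J HJ].
    destruct (target_dense w m0 Hm0 Hw g _ J Hg HgL He2) as [j [Hj [T1 T2]]].
    destruct (Horbit j) as [N [O1 O2]]. exists N.
    unfold sqsummable, sqnorm in T1, T2. rewrite wsum_csub_comm in T1, T2.
    destruct (sqnorm_csub_triangle w Hpos _ (target j) g O1 T1) as [R1 R2].
    pose proof (half_pow_antitone J j Hj).
    apply normX_lt_of_sqnorm; [exact Hpos | exact R1 | exact Heps | unfold sqnorm in *; lra].
  - intros g [Hg [_ HgL]] eps Heps.
    assert (He2 : 0 < eps ^ 2 / 4) by (apply Rdiv_lt_0_compat; [apply pow_lt|]; lra).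
    destruct (nilpoly_dense w m0 Hm0 Hw g _ Hg HgL He2) as [p [Hp [P1 P2]]].
    destruct (periodic_point_near w p _ Hpos Hsum Hp He2) as [f [Hf [Hper [F1 F2]]]].
    exists f. split; [exact Hf | split; [exact Hper|]].
    unfold sqsummable, sqnorm in P1, P2. rewrite wsum_csub_comm in P1, P2.
    destruct (sqnorm_csub_triangle w Hpos _ p g F1 P1) as [R1 R2].
    apply normX_lt_of_sqnorm; [exact Hpos | exact R1 | exact Heps | unfold sqnorm in *; lra].
Qed.

Lemma wsum_ext w1 w2 c : (forall n, (1 <= n)%nat -> w1 n = w2 n) -> c 0%nat = RtoC 0 -> wsum w1 c = wsum w2 c.
Proof.
  intros H Hc. apply functional_extensionality. intro n. unfold wsum.
  destruct n as [|n]; [rewrite Hc, Cmod_0; unfold Rdiv; ring | rewrite H by lia; reflexivity].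
Qed.

Lemma in_X_ext w1 w2 c : (forall n, (1 <= n)%nat -> w1 n = w2 n) -> in_X w1 c -> in_X w2 c.
Proof.
  intros H (Hl & Hh & He). repeat split; auto.
  unfold in_X in *. rewrite <- (wsum_ext w1 w2 c H); [exact He | apply Hl; lia].
Qed.

Lemma normX_ext w1 w2 c : (forall n, (1 <= n)%nat -> w1 n = w2 n) -> c 0%nat = RtoC 0 -> normX w1 c = normX w2 c.
Proof. intros H Hc. unfold normX. now rewrite (wsum_ext w1 w2 c H Hc). Qed.

Lemma csub_low3_at_0 f g : low3 f -> low3 g -> csub f g 0%nat = RtoC 0.
Proof. intros Hf Hg. unfold csub. rewrite Hf, Hg by lia. ring_C. Qed.

(* Elements of [X_omega] vanish at [0], so chaos does not depend on [omega 0]. *)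
Lemma chaotic_ext w1 w2 : (forall n, (1 <= n)%nat -> w1 n = w2 n) -> chaotic w1 -> chaotic w2.
Proof.
  intros H [[f [Hf Hd]] Hp].
  assert (H' : forall n, (1 <= n)%nat -> w2 n = w1 n) by (intros; symmetry; auto).
  split.
  - exists f. split; [exact (in_X_ext w1 w2 f H Hf)|]. intros g Hg eps Heps.
    destruct (Hd g (in_X_ext w2 w1 g H' Hg) eps Heps) as [N HN]. exists N.
    rewrite <- (normX_ext w1 w2); [exact HN | exact H |].
    apply csub_low3_at_0; [apply iter_Top_low3; exact (proj1 Hf) | exact (proj1 Hg)].
  - intros g Hg eps Heps. destruct (Hp g (in_X_ext w2 w1 g H' Hg) eps Heps) as [f' [Hf' [Hper Hn]]].
    exists f'. split; [exact (in_X_ext w1 w2 f' H Hf') | split; [exact Hper|]].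
    rewrite <- (normX_ext w1 w2); [exact Hn | exact H |].
    apply csub_low3_at_0; [exact (proj1 Hf') | exact (proj1 Hg)].
Qed.

Lemma chaotic_of_weight omega : (exists m, 0 < m /\ forall n, (1 <= n)%nat -> m <= omega n) ->
  doubling_summable omega -> chaotic omega.
Proof.
  intros [m [Hm Hlow]] Hsum. set (w := fun n => omega (Nat.max 1 n)).
  assert (Hw : forall n, (1 <= n)%nat -> w n = omega n) by (intros n Hn; unfold w; f_equal; lia).
  apply (chaotic_ext w omega Hw), (chaotic_of_lower_bound w m Hm).
  - intro n. apply Hlow. lia.
  - intros k Hk. apply (ex_series_ext (fun n => / omega (k * 2 ^ n)%nat)); [|now apply Hsum].
    intro n. rewrite Hw; [reflexivity|]. pose proof (Nat.pow_nonzero 2 n). nia.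
Qed.

Lemma omega0_lower_bound : exists m, 0 < m /\ forall n, (1 <= n)%nat -> m <= omega0 n.
Proof.
  pose proof PI_RGT_0. exists (/ PI). split; [now apply Rinv_0_lt_compat|]. intros n Hn. unfold omega0, Rdiv.
  rewrite <- (Rmult_1_l (/ PI)) at 1. apply Rmult_le_compat_r; [left; now apply Rinv_0_lt_compat|].
  apply (le_INR 1). lia.
Qed.

Lemma omega0_doubling_summable : doubling_summable omega0.
Proof.
  intros k Hk. pose proof PI_RGT_0.
  apply (Series_comparison _ (fun n => PI * (/ 2) ^ n)).
  - intro n. unfold omega0. pose proof (pow_lt 2 n ltac:(lra)).
    assert (HI : 2 ^ n <= INR (k * 2 ^ n + 1)).
    { rewrite <- (INR_IZR_INZ 2) at 1. rewrite <- pow_INR. apply le_INR.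
      pose proof (Nat.pow_nonzero 2 n). nia. }
    replace (/ (INR (k * 2 ^ n + 1) / PI)) with (PI * / INR (k * 2 ^ n + 1)) by (field; lra).
    rewrite pow_inv. split.
    + apply Rmult_le_pos; [lra | left; apply Rinv_0_lt_compat; lra].
    + apply Rmult_le_compat_l; [lra | now apply Rinv_le_contravar].
  - apply (ex_series_scal_l (V := R_NormedModule)), ex_series_geom. rewrite Rabs_pos_eq; lra.
Qed.

Theorem theorem3p18 :
  (forall omega : nat -> R,
     (forall n : nat, (1 <= n)%nat -> 0 < omega n) ->
     (exists m : R, 0 < m /\ forall n : nat, (1 <= n)%nat -> m <= omega n) ->
     (forall k : nat, (3 <= k)%nat ->
        ex_series (fun n : nat => / omega (k * 2 ^ n)%nat)) ->
     T_bounded omega ->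
     chaotic omega)
  /\ chaotic omega0.
Proof.
  split.
  - intros omega _ Hlow Hsum _. exact (chaotic_of_weight omega Hlow Hsum).
  - exact (chaotic_of_weight omega0 omega0_lower_bound omega0_doubling_summable).
Qed.
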